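(* In the network setting of the context, suppose there is at most one $i\in\mathcal I$ with $|\mathcal J(i)|>1$. Then for every $m\ge1$ there exist positive constants $\delta,\hat\kappa$ and a positive definite matrix $Q\in\mathbb R^{I\times I}$ such that the function $\mathcal V\in C^2(\mathbb R^I)$ with $\mathcal V(x)=(x^{\mathsf T}Qx)^{m/2}$ for $|x|\ge1$ satisfies $$\mathcal L^u\mathcal V(x)\le\hat\kappa-|x|^m\qquad\forall x\in\mathcal K_{\delta,+}^c,\ \forall u\in\mathbb U,$$ where $\mathcal K_{\delta,+}=\{x\in\mathbb R^I:e\cdot x>\delta|x|\}$.
   Context: Network setting. $\mathcal I=\{1,\dots,I\}$, $\mathcal J=\{1,\dots,J\}$; $\mathcal G$ a bipartite tree on $\mathcal I\cup\mathcal J$ with edges $i\sim j$; $\mathcal J(i)=\{j:i\sim j\}$. Constants $\lambda_i>0$, $\gamma_i\ge0$, $\ell_i\in\mathbb R$; $\mu_{ij}>0$ if $i\sim j$, $\mu_{ij}=0$ otherwise. $e$ = all-ones vector, $a^\pm$ positive/negative parts. For $e\cdot\alpha=e\cdot\beta$, $G(\alpha,\beta)$ is the unique $\psi\in\mathbb R^{I\times J}$ with row sums $\alpha_i$, column sums $\beta_j$, and $\psi_{ij}=0$ for $i\not\sim j$. $\mathbb U=\{u=(u^c,u^s)\in\mathbb R^I_+\times\mathbb R^J_+:e\cdot u^c=e\cdot u^s=1\}$; $\hat G[u](x)=G(x-(e\cdot x)^+u^c,-(e\cdot x)^-u^s)$; drift $b_i(x,u)=-\sum_{j\in\mathcal J(i)}\mu_{ij}\hat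 G_{ij}[u](x)-\gamma_i(e\cdot x)^+u^c_i+\ell_i$. Controlled generator $\mathcal L^u f(x)=\sum_i\lambda_i\partial_{ii}f(x)+b(x,u)\cdot\nabla f(x)$. *)

From mathcomp Require Import all_boot.
From Stdlib Require Import Reals ClassicalEpsilon.

Set Implicit Arguments.
Unset Strict Implicit.
Unset Printing Implicit Defensive.

Local Open Scope R_scope.

Definition vec (n : nat) := 'I_n -> R.

Definition sumR (n : nat) (f : 'I_n -> R) : R := \big[Rplus/0]_(i < n) f i.

Definition esum (n : nat) (x : vec n) : R := sumR x.

Definition vnorm (n : nat) (x : vec n) : R := sqrt (sumR (fun i => x i * x i)).

Definition pospart (a : R) : R := Rmax a 0.
Definition negpart (a : R) : R := Rmax (- a) 0.

Definition rpow (r m : R) : R := if Rle_dec r 0 then 0 else Rpower r m.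

Definition bvert (nI nJ : nat) : finType := ('I_nI + 'I_nJ)%type.

Definition badj (nI nJ : nat) (edge : 'I_nI -> 'I_nJ -> bool) : rel (bvert nI nJ) :=
  fun v w => match v, w with
             | inl i, inr j => edge i j
             | inr j, inl i => edge i j
             | _, _ => false
             end.

Definition graph_connected (T : finType) (adj : rel T) : Prop :=
  forall v w : T, connect adj v w.

Definition graph_acyclic (T : finType) (adj : rel T) : Prop :=
  ~ (exists (v : T) (p : seq T),
        (2 <= size p)%nat /\ uniq (v :: p) /\ path adj v p /\ adj (last v p) v).

Definition bipartite_tree (nI nJ : nat) (edge : 'I_nI -> 'I_nJ -> bool) : Prop :=
  graph_connected (badj edge) /\ graph_acyclic (badj edge).

Definition mat (nI nJ : nat) := 'I_nI -> 'I_nJ -> R.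

Definition is_G (nI nJ : nat) (edge : 'I_nI -> 'I_nJ -> bool)
  (alpha : vec nI) (beta : vec nJ) (psi : mat nI nJ) : Prop :=
  (forall i, sumR (fun j => psi i j) = alpha i) /\
  (forall j, sumR (fun i => psi i j) = beta j) /\
  (forall i j, edge i j = false -> psi i j = 0).

(* G(alpha,beta): the (unique, for a tree and e.alpha = e.beta) psi with
   the prescribed row/column sums supported on the edges. *)
Definition Gmap (nI nJ : nat) (edge : 'I_nI -> 'I_nJ -> bool)
  (alpha : vec nI) (beta : vec nJ) : mat nI nJ :=
  epsilon (inhabits (fun _ _ => 0)) (is_G edge alpha beta).

Definition in_U (nI nJ : nat) (uc : vec nI) (us : vec nJ) : Prop :=
  (forall i, 0 <= uc i) /\ (forall j, 0 <= us j) /\ esum uc = 1 /\ esum us = 1.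

Definition Ghat (nI nJ : nat) (edge : 'I_nI -> 'I_nJ -> bool)
  (uc : vec nI) (us : vec nJ) (x : vec nI) : mat nI nJ :=
  Gmap edge (fun i => x i - pospart (esum x) * uc i)
            (fun j => - (negpart (esum x) * us j)).

Definition drift (nI nJ : nat) (edge : 'I_nI -> 'I_nJ -> bool)
  (mu : mat nI nJ) (gam ell : vec nI) (x : vec nI) (uc : vec nI) (us : vec nJ)
  (i : 'I_nI) : R :=
  - (\big[Rplus/0]_(j < nJ | edge i j) (mu i j * Ghat edge uc us x i j))
  - gam i * pospart (esum x) * uc i + ell i.

Definition shift (n : nat) (x : vec n) (i : 'I_n) (t : R) : vec n :=
  fun k => if k == i then x k + t else x k.

Definition continuous_vec (n : nat) (g : vec n -> R) : Prop :=
  forall (x : vec n) (eps : R), 0 < eps -> exists delta, 0 < delta /\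
    forall y : vec n, (forall k, Rabs (y k - x k) < delta) -> Rabs (g y - g x) < eps.

Definition is_C2 (n : nat) (f : vec n -> R) (Df : 'I_n -> vec n -> R)
  (D2f : 'I_n -> 'I_n -> vec n -> R) : Prop :=
  (forall i x, derivable_pt_lim (fun t => f (shift x i t)) 0 (Df i x)) /\
  (forall i k x, derivable_pt_lim (fun t => Df i (shift x k t)) 0 (D2f i k x)) /\
  continuous_vec f /\ (forall i, continuous_vec (Df i)) /\
  (forall i k, continuous_vec (D2f i k)).

Definition gen (nI nJ : nat) (edge : 'I_nI -> 'I_nJ -> bool)
  (lam gam ell : vec nI) (mu : mat nI nJ)
  (Df : 'I_nI -> vec nI -> R) (D2f : 'I_nI -> 'I_nI -> vec nI -> R)
  (uc : vec nI) (us : vec nJ) (x : vec nI) : R :=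
  sumR (fun i => lam i * D2f i i x) +
  sumR (fun i => drift edge mu gam ell x uc us i * Df i x).

Definition qform (n : nat) (Q : 'I_n -> 'I_n -> R) (x : vec n) : R :=
  sumR (fun i => sumR (fun k => x i * Q i k * x k)).

Definition pos_def (n : nat) (Q : 'I_n -> 'I_n -> R) : Prop :=
  (forall i k, Q i k = Q k i) /\
  (forall x : vec n, (exists i, x i <> 0) -> 0 < qform Q x).

Definition deg (nI nJ : nat) (edge : 'I_nI -> 'I_nJ -> bool) (i : 'I_nI) : nat :=
  #|[pred j : 'I_nJ | edge i j]|.

From HB Require Import structures.
From mathcomp Require Import all_boot.
From Stdlib Require Import Reals Lra Psatz ClassicalEpsilon FunctionalExtensionality Classical.
Local Open Scope R_scope.

(* Since at most one class i0 has several servers, connectivity forces i0 to be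
   adjacent to every server and every other class (a leaf) to have exactly one;
   G is then explicit and the drift of a leaf i served by j is
   -mu_ij (x_i - (e.x)^+ u^c_i) - gamma_i (e.x)^+ u^c_i + l_i.
   For q(x) = a (e.x)^2 + sum_{i <> i0} x_i^2 with a small, the drift satisfies
   grad q . b <= 2 C - (min mu / 2) q on the cone e.x <= delta |x|: leaf
   coordinates are pulled back at rate >= min mu, the term (e.x)^2 is damped by
   the hub's service when e.x <= 0, and is small against the leaf coordinates
   inside the cone when e.x > 0.  The function V = T0 H(q)^(m/2), with H a C^2
   modification of the identity near 0, equals (x^T Q x)^(m/2) for |x| >= 1; its
   generator is m/2 T0 H^(m/2-1) (grad q . b + O(1)), at most
   -(min mu / 4) m T0 H^(m/2) + O(H^(m/2-1)), and T0 is chosen so that this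
   beats |x|^m <= (q / c0)^(m/2). *)

HB.instance Definition _ := Monoid.isComLaw.Build R 0 Rplus
  (fun a b c => esym (Rplus_assoc a b c)) Rplus_comm Rplus_0_l.

Lemma sumR_eq {n} (f g : 'I_n -> R) : (forall i, f i = g i) -> sumR f = sumR g.
Proof. by move=> H; apply: eq_bigr => i _. Qed.

Lemma sumR_split {n} (f g : 'I_n -> R) : sumR (fun i => f i + g i) = sumR f + sumR g.
Proof. by rewrite /sumR big_split. Qed.

Lemma sumR_scale {n} c (f : 'I_n -> R) : sumR (fun i => c * f i) = c * sumR f.
Proof.
rewrite /sumR; elim/big_rec2: _ => [|i y1 y2 _ ->]; first by rewrite Rmult_0_r.
by rewrite Rmult_plus_distr_l.
Qed.

Lemma sumRN {n} (f : 'I_n -> R) : sumR (fun i => - f i) = - sumR f.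
Proof.
rewrite (sumR_eq _ (fun i => -1 * f i)) ?sumR_scale => [|i]; ring.
Qed.

Lemma sumRB {n} (f g : 'I_n -> R) : sumR (fun i => f i - g i) = sumR f - sumR g.
Proof. by rewrite /Rminus sumR_split sumRN. Qed.

Lemma sumR_const {n} c : sumR (fun _ : 'I_n => c) = INR n * c.
Proof.
rewrite /sumR big_const_ord; elim: n => [|n IH]; first by simpl; ring.
by rewrite S_INR /= IH; ring.
Qed.

Lemma sumR_zero {n} : sumR (fun _ : 'I_n => 0) = 0.
Proof. by rewrite sumR_const Rmult_0_r. Qed.

Lemma sumR_ord0 (f : 'I_0 -> R) : sumR f = 0.
Proof. by rewrite /sumR big_ord0. Qed.

Lemma ler_sumR {n} (f g : 'I_n -> R) : (forall i, f i <= g i) -> sumR f <= sumR g.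
Proof.
move=> H; rewrite /sumR; elim/big_ind2: _ => //; first lra.
by move=> *; apply: Rplus_le_compat.
Qed.

Lemma sumR_ge0 {n} (f : 'I_n -> R) : (forall i, 0 <= f i) -> 0 <= sumR f.
Proof. by move=> H; rewrite -(@sumR_zero n); apply: ler_sumR. Qed.

Lemma sumR_le_const {n} (f : 'I_n -> R) c : (forall i, f i <= c) -> sumR f <= INR n * c.
Proof. by move=> H; rewrite -sumR_const; apply: ler_sumR. Qed.

Lemma sumR_abs_le {n} (f : 'I_n -> R) : Rabs (sumR f) <= sumR (fun i => Rabs (f i)).
Proof.
rewrite /sumR; elim/big_ind2: _ => [|a b c d H1 H2|i _].
- rewrite Rabs_R0; lra.
- apply: Rle_trans (Rabs_triang _ _) _; lra.
- lra.
Qed.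

Lemma sumR_exchange {n k} (F : 'I_n -> 'I_k -> R) :
  sumR (fun i => sumR (fun j => F i j)) = sumR (fun j => sumR (fun i => F i j)).
Proof. by rewrite /sumR exchange_big. Qed.

Lemma sumR_single {n} (f : 'I_n -> R) i0 : (forall i, i <> i0 -> f i = 0) -> sumR f = f i0.
Proof.
move=> H; rewrite /sumR (bigD1 i0) //= big1 ?Rplus_0_r // => i /eqP; exact: H.
Qed.

Lemma sumR_extract {n} (f : 'I_n -> R) i0 :
  sumR f = f i0 + sumR (fun i => if i == i0 then 0 else f i).
Proof.
rewrite /sumR (bigD1 i0) //= [in RHS](bigD1 i0) //= eqxx Rplus_0_l.
by congr (_ + _); apply: eq_bigr => i /negbTE ->.
Qed.

Lemma sumR_ge_term {n} (f : 'I_n -> R) i0 : (forall i, 0 <= f i) -> f i0 <= sumR f.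
Proof.
move=> H; rewrite (sumR_extract _ i0).
have : 0 <= sumR (fun i => if i == i0 then 0 else f i).
  by apply: sumR_ge0 => i; case: (i == i0); [lra | exact: H].
lra.
Qed.

Lemma sumR2_ge_term {nI nJ} (f : 'I_nI -> 'I_nJ -> R) i j : (forall i j, 0 <= f i j) ->
  f i j <= sumR (fun i => sumR (fun j => f i j)).
Proof.
move=> H; apply: Rle_trans (sumR_ge_term _ j (H i)) _.
by apply: (sumR_ge_term (fun i => sumR (fun j => f i j))) => k; apply: sumR_ge0.
Qed.

(* Cauchy-Schwarz, from [0 <= sum_i sum_j (w_i - w_j)^2]. *)
Lemma sumR_sqr_le {n} (w : 'I_n -> R) :
  sumR w * sumR w <= INR n * sumR (fun i => w i * w i).
Proof.
have row i : sumR (fun j => (w i - w j) * (w i - w j)) =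
    INR n * (w i * w i) + sumR (fun j => w j * w j) - 2 * w i * sumR w.
  rewrite -sumR_const -sumR_scale -sumR_split -sumRB.
  by apply: sumR_eq => j; ring.
have : 0 <= sumR (fun i => sumR (fun j => (w i - w j) * (w i - w j))).
  by apply: sumR_ge0 => i; apply: sumR_ge0 => j; apply: Rle_0_sqr.
rewrite (sumR_eq _ _ row) sumRB sumR_split sumR_const sumR_scale.
have cross : sumR (fun i => 2 * w i * sumR w) = 2 * sumR w * sumR w.
  by rewrite -sumR_scale; apply: sumR_eq => i; ring.
lra.
Qed.

Lemma sumR_le_affine {n} (f g : 'I_n -> R) c K :
  (forall i, f i <= c * g i + K) -> sumR f <= c * sumR g + INR n * K.
Proof.
by move=> H; rewrite -sumR_scale -sumR_const -sumR_split; apply: ler_sumR.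
Qed.

Lemma vnorm_sqr n (x : vec n) : vnorm x * vnorm x = sumR (fun i => x i * x i).
Proof. by rewrite /vnorm sqrt_sqrt //; apply: sumR_ge0 => i; apply: Rle_0_sqr. Qed.

Lemma Rpower_vnorm n (x : vec n) m : 0 < vnorm x ->
  Rpower (vnorm x) m = Rpower (sumR (fun i => x i * x i)) (m / 2).
Proof.
move=> hN; rewrite -vnorm_sqr -Rpower_mult_distr // -Rpower_plus.
by congr Rpower; field.
Qed.

Lemma Rdiv_le_0_compat a b : 0 <= a -> 0 < b -> 0 <= a / b.
Proof. by move=> ha hb; apply: Rmult_le_pos ha (Rlt_le _ _ (Rinv_0_lt_compat _ hb)). Qed.

Lemma Rpower_gt0 x y : 0 < Rpower x y.
Proof. exact: exp_pos. Qed.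

Lemma derivable_pt_lim_congr f x l l' : derivable_pt_lim f x l -> l = l' ->
  derivable_pt_lim f x l'.
Proof. by move=> h <-. Qed.

Lemma derivable_pt_lim_piecewise f f1 f2 x l r : 0 < r ->
  (forall h, Rabs h < r -> f (x + h) = f1 (x + h) \/ f (x + h) = f2 (x + h)) ->
  f x = f1 x -> f x = f2 x ->
  derivable_pt_lim f1 x l -> derivable_pt_lim f2 x l -> derivable_pt_lim f x l.
Proof.
move=> hr H e1 e2 d1 d2 eps he.
case: (d1 eps he) => [[r1 hr1] H1]; case: (d2 eps he) => [[r2 hr2] H2].
have hd : 0 < Rmin r (Rmin r1 r2) by repeat apply: Rmin_pos.
exists (mkposreal _ hd) => h hn /= hh.
have hh1 := Rlt_le_trans _ _ _ hh (Rmin_r _ _).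
case: (H h (Rlt_le_trans _ _ _ hh (Rmin_l _ _))) => ->.
- by rewrite e1; apply: H1 => //; apply: Rlt_le_trans hh1 (Rmin_l _ _).
- by rewrite e2; apply: H2 => //; apply: Rlt_le_trans hh1 (Rmin_r _ _).
Qed.

Lemma pospart_id z : 0 <= z -> pospart z = z.
Proof. by move=> h; apply: Rmax_left. Qed.
Lemma pospart_eq0 z : z <= 0 -> pospart z = 0.
Proof. by move=> h; apply: Rmax_right. Qed.
Lemma pospart_ge0 z : 0 <= pospart z.
Proof. exact: Rmax_r. Qed.
Lemma sub_pospart s : s - pospart s = - negpart s.
Proof. rewrite /pospart /negpart /Rmax; repeat case: Rle_dec => ?; lra. Qed.

Lemma continuity_pt_pospart x : continuity_pt pospart x.
Proof.
move=> eps he; exists eps; split => // y [_ hy]; apply: Rle_lt_trans hy; rewrite /= /Rdist.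
rewrite /pospart /Rmax; repeat case: Rle_dec => ?; rewrite /Rabs;
  repeat case: Rcase_abs => ?; lra.
Qed.

Lemma derivable_pt_lim_pospart_pow k z : (2 <= k)%nat ->
  derivable_pt_lim (fun z => pospart z ^ k) z (INR k * pospart z ^ k.-1).
Proof.
move=> hk; have pow0 j : (0 < j)%nat -> 0 ^ j = 0 by move/ltP; exact: pow_i.
have zk : 0 ^ k = 0 by apply: pow0; case: k hk => [|[|]].
have zk1 : 0 ^ k.-1 = 0 by apply: pow0; case: k hk {zk} => [|[|]].
have [hz|[hz|hz]] := Rtotal_order z 0.
- apply: (derivable_pt_lim_locally_ext (fun _ => 0) _ _ (z - 1) 0); first lra.
    by move=> y hy; rewrite pospart_eq0 ?zk //; lra.
  by rewrite pospart_eq0 ?zk1 ?Rmult_0_r; [exact: derivable_pt_lim_const | lra].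
- subst z; rewrite pospart_eq0 ?zk1 ?Rmult_0_r; last lra.
  apply: (@derivable_pt_lim_piecewise _ (fun y => y ^ k) (fun _ => 0) 0 0 1); try lra.
  + move=> h _; case: (Rle_lt_dec (0 + h) 0) => hh; first by right; rewrite pospart_eq0 ?zk.
    by left; rewrite pospart_id //; lra.
  + by rewrite pospart_id ?zk //; lra.
  + by rewrite pospart_eq0 ?zk //; lra.
  + by have := derivable_pt_lim_pow 0 k; rewrite zk1 Rmult_0_r.
  + exact: derivable_pt_lim_const.
- apply: (derivable_pt_lim_locally_ext (fun y => y ^ k) _ _ 0 (z + 1)); first lra.
    by move=> y hy; rewrite pospart_id //; lra.
  by rewrite pospart_id; [exact: derivable_pt_lim_pow | lra].
Qed.

Lemma derivable_pt_lim_chain (f g : R -> R) x a b : derivable_pt_lim g x a ->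
  derivable_pt_lim f (g x) b -> derivable_pt_lim (fun y => f (g y)) x (b * a).
Proof. exact: derivable_pt_lim_comp. Qed.

(* A C^2 function that is the identity on [c, +oo) and stays above c/3; the
   cubic correction matches value, slope and curvature of the identity at c. *)
Definition sfloor c r := r + pospart (c - r) ^ 3 / (3 * (c * c)).
Definition sfloor' c r := 1 - pospart (c - r) ^ 2 / (c * c).
Definition sfloor'' c r := 2 * pospart (c - r) / (c * c).
Definition sfpow c p r := Rpower (sfloor c r) p.

Section SoftFloor.
Variable c : R.
Hypothesis c_gt0 : 0 < c.

Lemma derivable_pt_lim_pospart_sub_pow k r : (2 <= k)%nat ->
  derivable_pt_lim (fun y => pospart (c - y) ^ k) r (- (INR k * pospart (c - r) ^ k.-1)).
Proof.
move=> hk.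
have hsub : derivable_pt_lim (fun y => c - y) r (-1).
  apply: derivable_pt_lim_congr.
    exact: (derivable_pt_lim_minus (fun _ => c) id _ _ _ (derivable_pt_lim_const c r)
                                  (derivable_pt_lim_id r)).
  ring.
apply: derivable_pt_lim_congr.
  exact: (derivable_pt_lim_chain (fun z => pospart z ^ k) _ _ _ _ hsub
           (derivable_pt_lim_pospart_pow k (c - r) hk)).
ring.
Qed.

Lemma derivable_sfloor r : derivable_pt_lim (sfloor c) r (sfloor' c r).
Proof.
apply: derivable_pt_lim_congr.
  apply: (derivable_pt_lim_plus id); first exact: derivable_pt_lim_id.
  exact: derivable_pt_lim_div_scal (derivable_pt_lim_pospart_sub_pow 3 r isT).
rewrite /sfloor' /=; field; lra.
Qed.

Lemma derivable_sfloor' r : derivable_pt_lim (sfloor' c) r (sfloor'' c r).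
Proof.
apply: derivable_pt_lim_congr.
  apply: (derivable_pt_lim_minus (fun _ => 1)); first exact: derivable_pt_lim_const.
  exact: derivable_pt_lim_div_scal (derivable_pt_lim_pospart_sub_pow 2 r isT).
rewrite /sfloor'' /=; field; lra.
Qed.

Lemma sfloor_id r : c <= r -> sfloor c r = r.
Proof. by move=> h; rewrite /sfloor pospart_eq0 /= /Rdiv; [ring | lra]. Qed.

Lemma sfloor'_id r : c <= r -> sfloor' c r = 1.
Proof. by move=> h; rewrite /sfloor' pospart_eq0 /= /Rdiv; [ring | lra]. Qed.

Lemma sfloor_ge_third r : c / 3 <= sfloor c r.
Proof.
case: (Rle_lt_dec c r) => h; first by rewrite sfloor_id //; lra.
rewrite /sfloor pospart_id; last lra.
set z := c - r; have -> : r = c - z by rewrite /z; ring.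
have key : 0 <= (z - c) * (z - c) * (z + 2 * c) / (3 * (c * c)).
  apply: Rdiv_le_0_compat; [apply: Rmult_le_pos; [apply: Rle_0_sqr | rewrite /z; lra] | nra].
have : c - z + z ^ 3 / (3 * (c * c)) - c / 3 =
       (z - c) * (z - c) * (z + 2 * c) / (3 * (c * c)) by field; lra.
lra.
Qed.

Lemma sfloor_gt0 r : 0 < sfloor c r.
Proof. by have := sfloor_ge_third r; lra. Qed.

Lemma sfloor_ge r : 0 <= r -> r <= sfloor c r.
Proof.
move=> hr; rewrite /sfloor.
have : 0 <= pospart (c - r) ^ 3 / (3 * (c * c)).
  by apply: Rdiv_le_0_compat; [apply: pow_le; exact: pospart_ge0 | nra].
lra.
Qed.

Lemma sfloor'_bounds r : 0 <= r -> 0 <= sfloor' c r <= 1.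
Proof.
move=> hr; case: (Rle_lt_dec c r) => h; first by rewrite sfloor'_id //; lra.
rewrite /sfloor' pospart_id /=; last lra.
have h1 : 0 <= (c - r) * ((c - r) * 1) / (c * c) by apply: Rdiv_le_0_compat; nra.
have h2 : (c - r) * ((c - r) * 1) / (c * c) <= 1.
  apply: (Rmult_le_reg_r (c * c)); first nra.
  rewrite /Rdiv Rmult_assoc Rinv_l; nra.
lra.
Qed.

Lemma sfloor''_bounds r : 0 <= r -> 0 <= sfloor'' c r /\ sfloor'' c r * r <= 2.
Proof.
move=> hr; case: (Rle_lt_dec c r) => h.
  by rewrite /sfloor'' pospart_eq0; [split; lra | lra].
rewrite /sfloor'' pospart_id; last lra.
split; first by apply: Rdiv_le_0_compat; nra.
have -> : 2 * (c - r) / (c * c) * r = 2 * ((c - r) * r) / (c * c) by field; lra.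
apply: (Rmult_le_reg_r (c * c)); first nra.
rewrite /Rdiv Rmult_assoc Rinv_l; nra.
Qed.

Lemma sfloor_le r : 0 <= r -> sfloor c r <= c + sfloor' c r * r.
Proof.
move=> hr; case: (Rle_lt_dec c r) => h.
  by rewrite sfloor_id // sfloor'_id //; lra.
have [h'0 _] := sfloor'_bounds r hr.
suff : sfloor c r <= c by nra.
rewrite /sfloor pospart_id; last lra.
set z := c - r; have -> : r = c - z by rewrite /z; ring.
have hz : 0 < z <= c by rewrite /z; lra.
suff : z ^ 3 / (3 * (c * c)) <= z by lra.
apply: (Rmult_le_reg_r (3 * (c * c))); first nra.
rewrite /Rdiv Rmult_assoc Rinv_l /=; last nra.
have : z * z <= c * c by nra.
nra.
Qed.

Lemma derivable_sfpow q r :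
  derivable_pt_lim (sfpow c q) r (q * sfpow c (q - 1) r * sfloor' c r).
Proof.
apply: derivable_pt_lim_congr.
  exact: (derivable_pt_lim_chain (fun z => Rpower z q) _ _ _ _ (derivable_sfloor r)
           (derivable_pt_lim_power _ q (sfloor_gt0 r))).
by rewrite /sfpow; ring.
Qed.

End SoftFloor.

Section VecContinuity.
Variable n : nat.
Implicit Types f g : vec n -> R.

Lemma continuous_vec_const c : continuous_vec (fun _ : vec n => c).
Proof. move=> x eps he; exists 1; split=> [|y _]; rewrite ?Rminus_diag ?Rabs_R0; lra. Qed.

Lemma continuous_vec_coord (k : 'I_n) : continuous_vec (fun y : vec n => y k).
Proof. by move=> x eps he; exists eps; split=> // y; apply. Qed.

Lemma continuous_vec_plus f g : continuous_vec f -> continuous_vec g ->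
  continuous_vec (fun y => f y + g y).
Proof.
move=> hf hg x eps he.
have [d1 [hd1 H1]] := hf x (eps / 2) ltac:(lra).
have [d2 [hd2 H2]] := hg x (eps / 2) ltac:(lra).
exists (Rmin d1 d2); split=> [|y hy]; first exact: Rmin_pos.
have a1 := H1 y (fun k => Rlt_le_trans _ _ _ (hy k) (Rmin_l _ _)).
have a2 := H2 y (fun k => Rlt_le_trans _ _ _ (hy k) (Rmin_r _ _)).
have -> : f y + g y - (f x + g x) = (f y - f x) + (g y - g x) by ring.
apply: Rle_lt_trans (Rabs_triang _ _) _; lra.
Qed.

Lemma continuous_vec_comp (h : R -> R) g : continuous_vec g ->
  (forall x, continuity_pt h (g x)) -> continuous_vec (fun y => h (g y)).
Proof.
move=> hg hh x eps he.
have [d [hd H]] := hh x eps he.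
have [d' [hd' H']] := hg x d hd.
exists d'; split=> // y hy.
case: (Req_dec (g y) (g x)) => [->|hne]; first by rewrite Rminus_diag Rabs_R0.
by apply: (H (g y)); split; [split=> //; apply: not_eq_sym | exact: H'].
Qed.

Lemma continuous_vec_scal c f : continuous_vec f -> continuous_vec (fun y => c * f y).
Proof.
move=> hf; apply: (continuous_vec_comp (fun r => c * r)) => //.
by move=> x; reg.
Qed.

Lemma continuous_vec_sqr f : continuous_vec f -> continuous_vec (fun y => f y * f y).
Proof.
move=> hf; apply: (continuous_vec_comp (fun r => r * r)) => //.
by move=> x; reg.
Qed.

(* Polarization reduces products to squares. *)
Lemma continuous_vec_mult f g : continuous_vec f -> continuous_vec g ->
  continuous_vec (fun y => f y * g y).
Proof.
move=> hf hg.
have -> : (fun y => f y * g y) = (fun y => / 4 * ((f y + g y) * (f y + g y)) +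
                                 - / 4 * ((f y + -1 * g y) * (f y + -1 * g y))).
  by apply: functional_extensionality => y; field.
apply: continuous_vec_plus; apply: continuous_vec_scal; apply: continuous_vec_sqr;
  apply: continuous_vec_plus => //; exact: continuous_vec_scal.
Qed.

Lemma continuous_vec_sum k (F : 'I_k -> vec n -> R) : (forall i, continuous_vec (F i)) ->
  continuous_vec (fun y => sumR (fun i => F i y)).
Proof.
move=> hF; rewrite /sumR; elim: (index_enum _) => [|a r IH].
  under [fun y => _]functional_extensionality => y do rewrite big_nil.
  exact: continuous_vec_const.
under [fun y => _]functional_extensionality => y do rewrite big_cons.
exact: continuous_vec_plus.
Qed.
End VecContinuity.

Section HubGraph.
Variables (nI nJ : nat) (edge : 'I_nI -> 'I_nJ -> bool).

Lemma exists_hub : (0 < nI)%nat ->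
  (forall i1 i2, (1 < deg edge i1)%nat -> (1 < deg edge i2)%nat -> i1 = i2) ->
  exists i0, forall i, i != i0 -> (deg edge i <= 1)%nat.
Proof.
move=> nI_gt0 Hone.
case: (classic (exists i, (1 < deg edge i)%nat)) => [[i1 hi1]|hno].
- exists i1 => i hi; rewrite leqNgt; apply/negP => h.
  by move: hi; rewrite (Hone _ _ h hi1) eqxx.
- exists (Ordinal nI_gt0) => i _; rewrite leqNgt; apply/negP => h.
  by apply: hno; exists i.
Qed.

Hypothesis connected : graph_connected (badj edge).
Variable i0 : 'I_nI.
Hypothesis deg_le1 : forall i, i != i0 -> (deg edge i <= 1)%nat.

Lemma leaf_edge_uniq i j1 j2 : i != i0 -> edge i j1 -> edge i j2 -> j1 = j2.
Proof.
move=> hi h1 h2; apply/eqP; apply/negP => hne.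
have : (1 < deg edge i)%nat by apply/card_gt1P; exists j1, j2; split=> //; apply/negP.
by rewrite ltnNge deg_le1.
Qed.

Lemma leaf_exists_edge i : i != i0 -> exists j, edge i j.
Proof.
move=> hi; have /connectP [[|[i'|j] p]] //= := connected (inl i) (inl i0).
- by move=> _ [e]; rewrite e eqxx in hi.
- by move=> /andP [hj _] _; exists j.
Qed.

(* The component of [j] in the graph without the hub consists of [j] and its
   leaves; by connectivity it must contain the hub, so the hub serves [j]. *)
Lemma hub_adj j : edge i0 j.
Proof.
case hn : (edge i0 j) => //.
pose a : pred (bvert nI nJ) :=
  fun v => match v with inr j' => j' == j | inl i => edge i j end.
have hcl : closed (badj edge) a.
  have leaf i j' : edge i j' -> edge i j -> j' == j.
    move=> he hij; have hi : i != i0 by apply/eqP => e; move: hij; rewrite e hn.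
    by rewrite (leaf_edge_uniq _ _ _ hi he hij).
  move=> [i|j1] [i'|j2] //= he; rewrite /in_mem /=.
  - case hij : (edge i j); first by rewrite (leaf _ _ he hij).
    by case: eqP => // e; rewrite -e he in hij.
  - case hij : (edge i' j); first by rewrite (leaf _ _ he hij).
    by case: eqP => // e; rewrite -e he in hij.
have := closed_connect hcl (connected (inr j) (inl i0)).
by rewrite /in_mem /= eqxx hn.
Qed.

Lemma leaf_single_edge i : i != i0 ->
  exists j0, edge i j0 /\ forall j, j <> j0 -> edge i j = false.
Proof.
move=> hi; have [j0 h0] := leaf_exists_edge i hi.
exists j0; split=> // j hne; apply/negP => h; apply: hne.
exact: (leaf_edge_uniq _ _ _ hi h h0).
Qed.
End HubGraph.

Section StarFlow.
Variables (nI nJ : nat) (edge : 'I_nI -> 'I_nJ -> bool) (i0 : 'I_nI).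
Hypothesis hub_adj : forall j, edge i0 j.
Hypothesis leaf_single : forall i, i != i0 ->
  exists j0, edge i j0 /\ forall j, j <> j0 -> edge i j = false.

Lemma leaf_row_sum i (g : 'I_nJ -> R) : i != i0 ->
  exists j0, edge i j0 /\ sumR (fun j => if edge i j then g j else 0) = g j0.
Proof.
move=> hi; have [j0 [h0 H]] := leaf_single i hi; exists j0; split=> //.
by rewrite (sumR_single _ j0) ?h0 // => j hj; rewrite H.
Qed.

(* Leaves route their whole load to their unique server; the hub takes up the
   remainder in each column. *)
Lemma is_G_exists (alpha : vec nI) (beta : vec nJ) : sumR alpha = sumR beta ->
  exists psi, is_G edge alpha beta psi.
Proof.
move=> hsum.
pose w (k : 'I_nI) (j : 'I_nJ) := if k == i0 then 0 else if edge k j then alpha k else 0.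
have hw (k : 'I_nI) : sumR (fun j => w k j) = if k == i0 then 0 else alpha k.
  rewrite /w; case: eqP => [_|/eqP hk]; first exact: sumR_zero.
  by have [j0 [_ ->]] := leaf_row_sum k (fun _ => alpha k) hk.
exists (fun i j => if i == i0 then beta j - sumR (fun k => w k j)
                   else if edge i j then alpha i else 0).
split; [|split].
- move=> i; case: eqP => [->|/eqP hi].
    rewrite sumRB sumR_exchange (sumR_eq _ _ hw) -hsum (sumR_extract alpha i0); ring.
  by have [j0 [_ ->]] := leaf_row_sum i (fun _ => alpha i) hi.
- move=> j; rewrite (sumR_extract _ i0) eqxx.
  rewrite (sumR_eq _ (fun k => w k j)) => [|k]; last by rewrite /w; case: eqP.
  ring.
- move=> i j he; case: eqP => [e|_]; first by rewrite e hub_adj in he.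
  by rewrite he.
Qed.

Lemma Gmap_is_G (alpha : vec nI) (beta : vec nJ) : sumR alpha = sumR beta ->
  is_G edge alpha beta (Gmap edge alpha beta).
Proof. by move=> h; apply: epsilon_spec; exact: is_G_exists. Qed.

Variables (mu : 'I_nI -> 'I_nJ -> R) (alpha : vec nI) (beta : vec nJ) (psi : mat nI nJ).
Hypothesis psi_G : is_G edge alpha beta psi.

Lemma is_G_leaf_row i : i != i0 -> exists j0, edge i j0 /\
  sumR (fun j => mu i j * psi i j) = mu i j0 * alpha i /\
  sumR (fun j => (mu i j - mu i0 j) * psi i j) = (mu i j0 - mu i0 j0) * alpha i.
Proof.
move=> hi; have [j0 [h0 H]] := leaf_single i hi; exists j0; split=> //.
have [hrow [_ hsupp]] := psi_G.
have hz j : j <> j0 -> psi i j = 0 by move=> hj; apply: hsupp; apply: H.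
have <- : psi i j0 = alpha i by rewrite -(hrow i) (sumR_single _ j0).
by split; rewrite (sumR_single _ j0) // => j hj; rewrite hz //; ring.
Qed.

Lemma is_G_total_flow :
  sumR (fun i => sumR (fun j => mu i j * psi i j)) =
  sumR (fun j => mu i0 j * beta j) +
  sumR (fun i => sumR (fun j => (mu i j - mu i0 j) * psi i j)).
Proof.
have [_ [hcol _]] := psi_G.
rewrite sumR_exchange [in X in _ = _ + X]sumR_exchange -sumR_split.
apply: sumR_eq => j.
by rewrite -(hcol j) -sumR_scale -sumR_split; apply: sumR_eq => i; ring.
Qed.
End StarFlow.

Definition offhub {n} (i0 : 'I_n) (x : vec n) (i : 'I_n) : R :=
  if i == i0 then 0 else x i.

Definition qlyap {n} (a : R) (i0 : 'I_n) (x : vec n) : R :=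
  a * (esum x * esum x) + sumR (fun i => offhub i0 x i * offhub i0 x i).
Definition qlyap_grad {n} (a : R) (i0 : 'I_n) (x : vec n) (i : 'I_n) : R :=
  2 * a * esum x + 2 * offhub i0 x i.
Definition qlyap_hess {n} (a : R) (i0 : 'I_n) (i k : 'I_n) : R :=
  2 * a + (if (i == k) && (i != i0) then 2 else 0).
Definition qlyap_mat {n} (a : R) (i0 : 'I_n) (i k : 'I_n) : R :=
  a + (if (i == k) && (i != i0) then 1 else 0).

Section QuadraticForm.
Variables (n : nat) (a : R) (i0 : 'I_n).
Implicit Types x : vec n.

Lemma esum_shift x i t : esum (shift x i t) = esum x + t.
Proof.
pose d k := if k == i then t else 0.
rewrite /esum /shift (sumR_eq _ (fun k => x k + d k)) => [|k].
  by rewrite sumR_split (sumR_single d i) /d ?eqxx // => k /eqP/negbTE ->.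
by rewrite /d; case: eqP => _; ring.
Qed.

Lemma qlyap_shift x i t :
  qlyap a i0 (shift x i t) =
  qlyap a i0 x + qlyap_grad a i0 x i * t + qlyap_hess a i0 i i / 2 * (t * t).
Proof.
pose d k := if k == i then 2 * offhub i0 x i * t + (if i == i0 then 0 else t * t) else 0.
rewrite /qlyap /qlyap_grad /qlyap_hess esum_shift.
rewrite (sumR_eq _ (fun k => offhub i0 x k * offhub i0 x k + d k)); last first.
  move=> k; rewrite /d /offhub /shift.
  by case: (eqVneq k i) => [->|_]; [case: (i == i0) | case: (k == i0)]; ring.
rewrite sumR_split (sumR_single d i) => [|k /eqP/negbTE]; last by rewrite /d => ->.
rewrite /d eqxx /=.
by case: (eqVneq i i0) => [e|_] /=; [rewrite /offhub e eqxx /=; field | field].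
Qed.

Lemma qlyap_grad_shift x i k t :
  qlyap_grad a i0 (shift x k t) i = qlyap_grad a i0 x i + qlyap_hess a i0 i k * t.
Proof.
rewrite /qlyap_grad /qlyap_hess esum_shift /offhub /shift.
by case: (eqVneq i k) => [->|_] /=; [case: (k == i0) | case: (i == i0)] => /=; ring.
Qed.

Lemma qform_qlyap_mat t x : qform (fun i k => t * qlyap_mat a i0 i k) x = t * qlyap a i0 x.
Proof.
have row i : sumR (fun k => x i * (t * qlyap_mat a i0 i k) * x k) =
             t * a * (x i * esum x) + t * (offhub i0 x i * offhub i0 x i).
  pose e k := x i * (if (i == k) && (i != i0) then 1 else 0) * x k.
  rewrite (sumR_eq _ (fun k => t * a * (x i * x k) + t * e k)) => [|k]; last first.
    by rewrite /qlyap_mat /e; ring.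
  rewrite sumR_split !sumR_scale (sumR_single e i) => [|k hk].
    by rewrite /e /offhub /esum eqxx /=; case: (i == i0) => /=; ring.
  by rewrite /e (_ : (i == k) = false) /=; [ring | apply/negbTE/eqP => e'; apply: hk].
rewrite /qform (sumR_eq _ _ row) sumR_split !sumR_scale /qlyap.
rewrite (sumR_eq _ (fun i => esum x * x i)) => [|i]; last ring.
by rewrite sumR_scale /esum; ring.
Qed.

Lemma esum_offhub x : esum x = x i0 + sumR (fun i => offhub i0 x i).
Proof. by rewrite /esum (sumR_extract _ i0). Qed.

Lemma sumsq_offhub x :
  sumR (fun i => x i * x i) = x i0 * x i0 + sumR (fun i => offhub i0 x i * offhub i0 x i).
Proof.
rewrite (sumR_extract _ i0); congr (_ + _).
by apply: sumR_eq => k; rewrite /offhub; case: (k == i0); ring.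
Qed.

Lemma sumsq_le_offhub x :
  sumR (fun i => x i * x i) <=
  2 * (esum x * esum x) + (2 * INR n + 1) * sumR (fun i => offhub i0 x i * offhub i0 x i).
Proof.
rewrite sumsq_offhub.
have hs := esum_offhub x.
have cs := sumR_sqr_le (fun i => offhub i0 x i).
move: hs cs; set Z := sumR (fun i => offhub i0 x i).
set Y := sumR (fun i => offhub i0 x i * offhub i0 x i); set s := esum x => hs cs.
have hY : 0 <= Y by apply: sumR_ge0 => i; apply: Rle_0_sqr.
have -> : x i0 = s - Z by lra.
have := Rle_0_sqr (s + Z); rewrite /Rsqr; nra.
Qed.

Lemma qlyap_ge0 x : 0 <= a -> 0 <= qlyap a i0 x.
Proof.
move=> ha; rewrite /qlyap.
have := sumR_ge0 (fun i => offhub i0 x i * offhub i0 x i) (fun i => Rle_0_sqr _).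
have := Rle_0_sqr (esum x); rewrite /Rsqr; nra.
Qed.

Lemma sumsq_le_qlyap x : 0 < a ->
  sumR (fun i => x i * x i) <= (2 / a + 2 * INR n + 1) * qlyap a i0 x.
Proof.
move=> ha; have h := sumsq_le_offhub x.
have hY := sumR_ge0 (fun i => offhub i0 x i * offhub i0 x i) (fun i => Rle_0_sqr _).
move: h hY; rewrite /qlyap.
set Y := sumR (fun i => offhub i0 x i * offhub i0 x i); set S := esum x * esum x => h hY.
have hS : 0 <= S by apply: Rle_0_sqr.
have hn := pos_INR n.
have -> : (2 / a + 2 * INR n + 1) * (a * S + Y) =
          2 * S + (2 * INR n + 1) * Y + 2 / a * Y + (2 * INR n + 1) * a * S by field; lra.
have : 0 <= 2 / a * Y by apply: Rmult_le_pos => //; apply: Rdiv_le_0_compat; lra.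
have : 0 <= (2 * INR n + 1) * a * S by apply: Rmult_le_pos => //; nra.
lra.
Qed.
End QuadraticForm.

Lemma abs_mul_le_amgm u v p : 0 < p ->
  Rabs u * Rabs v <= p / 2 * (u * u) + v * v / (2 * p).
Proof.
move=> hp.
have <- : Rabs u * Rabs u = u * u by rewrite -Rabs_mult Rabs_pos_eq //; nra.
have <- : Rabs v * Rabs v = v * v by rewrite -Rabs_mult Rabs_pos_eq //; nra.
have : 0 <= (p * Rabs u - Rabs v) * (p * Rabs u - Rabs v) / (2 * p).
  by apply: Rdiv_le_0_compat; [apply: Rle_0_sqr | lra].
have -> : (p * Rabs u - Rabs v) * (p * Rabs u - Rabs v) / (2 * p) =
          p / 2 * (Rabs u * Rabs u) + Rabs v * Rabs v / (2 * p) - Rabs u * Rabs v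
  by field; lra.
lra.
Qed.

Lemma mul_le_abs_bounds a b A B : Rabs a <= A -> Rabs b <= B -> a * b <= A * B.
Proof.
move=> ha hb; apply: Rle_trans (Rle_abs _) _; rewrite Rabs_mult.
by apply: Rmult_le_compat => //; apply: Rabs_pos.
Qed.

Lemma linear_le_sqr M X m : 0 <= M -> 0 < m ->
  M * Rabs X <= m / 8 * (X * X) + 2 * (M * M) / m.
Proof.
move=> hM hm; have := abs_mul_le_amgm X M (m / 4) ltac:(lra).
rewrite (Rabs_pos_eq M) //.
have -> : M * M / (2 * (m / 4)) = 2 * (M * M) / m by field; lra.
have -> : m / 4 / 2 = m / 8 by field.
lra.
Qed.

(* The contribution of a leaf [i] to the drift of [qlyap] when e.x <= 0:
   [X = x_i], [s = e.x], [mu] its service rate and [d = mu_i - mu_hub]. *)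
Lemma leaf_term_le_nonpos a m M n X s mu d ell :
  0 < a -> 0 < m -> 0 < M -> 0 < n -> a * (4 * n * (M * M)) <= m * m ->
  m <= mu -> Rabs d <= M -> Rabs ell <= M ->
  X * (- (mu * X) + ell) - a * s * (d * X) <=
  - (5 * m / 8) * (X * X) + a * m / (4 * n) * (s * s) + 2 * (M * M) / m.
Proof.
move=> ha hm hM hn hc hmu hd hl.
have hX := Rle_0_sqr X; rewrite /Rsqr in hX.
have h_ell : X * ell <= m / 8 * (X * X) + 2 * (M * M) / m.
  apply: Rle_trans (linear_le_sqr M X m ltac:(lra) hm).
  by rewrite Rmult_comm; apply: mul_le_abs_bounds => //; lra.
have h_cross : - (s * (d * X)) <= m / (4 * n) * (s * s) + n * (M * M) / m * (X * X).
  have := abs_mul_le_amgm s (M * X) (m / (2 * n)) ltac:(apply: Rdiv_lt_0_compat; lra).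
  have -> : M * X * (M * X) / (2 * (m / (2 * n))) = n * (M * M) / m * (X * X) by field; lra.
  have -> : m / (2 * n) / 2 = m / (4 * n) by field; lra.
  suff : - (s * (d * X)) <= Rabs s * Rabs (M * X) by lra.
  rewrite -Rabs_mult; apply: Rle_trans (Rle_abs _) _.
  rewrite Rabs_Ropp !Rabs_mult (Rabs_pos_eq M); last lra.
  apply: Rmult_le_compat_l; first exact: Rabs_pos.
  by apply: Rmult_le_compat_r; [exact: Rabs_pos | lra].
have h_a : a * (n * (M * M) / m) <= m / 4.
  apply: (Rmult_le_reg_r (4 * m)); first lra.
  have -> : a * (n * (M * M) / m) * (4 * m) = a * (4 * n * (M * M)) by field; lra.
  lra.
have := Rmult_le_compat_l _ _ _ (Rlt_le _ _ ha) h_cross.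
have := Rmult_le_compat_r _ _ _ hX h_a.
have -> : a * (m / (4 * n) * (s * s) + n * (M * M) / m * (X * X)) =
          a * m / (4 * n) * (s * s) + a * (n * (M * M) / m) * (X * X) by field; lra.
nra.
Qed.

(* The same contribution when e.x > 0, with [u = u^c_i] and [g = gamma_i]. *)
Lemma leaf_term_le_pos a m M X s u mu d g ell :
  0 < a <= 1 -> 0 < m -> 0 < M -> 0 < s -> 0 <= u <= 1 ->
  m <= mu <= M -> 0 <= g <= M -> Rabs d <= M -> Rabs ell <= M ->
  X * (- (mu * (X - s * u)) - g * s * u + ell) - a * s * (d * (X - s * u)) <=
  - (3 * m / 4) * (X * X) + (18 * (M * M) / m + M) * (s * s) + 2 * (M * M) / m.
Proof.
move=> [ha0 ha1] hm hM hs [hu0 hu1] [hmu0 hmu1] [hg0 hg1] hd hl.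
have hX := Rle_0_sqr X; rewrite /Rsqr in hX.
have had : Rabs (a * d) <= M.
  by rewrite Rabs_mult Rabs_pos_eq; [have := Rabs_pos d; nra | lra].
have hcoef : Rabs (mu * u - g * u - a * d) <= 3 * M.
  have hmuu : Rabs (mu * u) <= M by rewrite Rabs_pos_eq; nra.
  have hgu : Rabs (g * u) <= M by rewrite Rabs_pos_eq; nra.
  have : Rabs (mu * u - g * u - a * d) <= Rabs (mu * u - g * u) + Rabs (a * d).
    by rewrite -(Rabs_Ropp (a * d)); apply: Rabs_triang.
  have : Rabs (mu * u - g * u) <= Rabs (mu * u) + Rabs (g * u).
    by rewrite -(Rabs_Ropp (g * u)); apply: Rabs_triang.
  lra.
have h_lin : s * ((mu * u - g * u - a * d) * X) <= m / 8 * (X * X) + 18 * (M * M) / m * (s * s).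
  have := linear_le_sqr (3 * M * s) X m ltac:(nra) hm.
  have -> : 2 * (3 * M * s * (3 * M * s)) / m = 18 * (M * M) / m * (s * s) by field; lra.
  have : (mu * u - g * u - a * d) * X <= 3 * M * Rabs X.
    by apply: mul_le_abs_bounds => //; lra.
  nra.
have h_ell : X * ell <= m / 8 * (X * X) + 2 * (M * M) / m.
  apply: Rle_trans (linear_le_sqr M X m ltac:(lra) hm).
  by rewrite Rmult_comm; apply: mul_le_abs_bounds => //; lra.
have h_adu : a * d * u <= M.
  have : a * d * u <= Rabs (a * d) * 1.
    by apply: mul_le_abs_bounds; [lra | rewrite Rabs_pos_eq; lra].
  lra.
have -> : X * (- (mu * (X - s * u)) - g * s * u + ell) - a * s * (d * (X - s * u)) =
          - (mu * (X * X)) + s * ((mu * u - g * u - a * d) * X) + X * ell +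
          (s * s) * (a * d * u) by ring.
have : - (mu * (X * X)) <= - (m * (X * X)) by nra.
have : (s * s) * (a * d * u) <= (s * s) * M by apply: Rmult_le_compat_l; nra.
lra.
Qed.

Lemma mul_le_amgm_bound s L N p : 0 < p -> Rabs L <= N ->
  s * L <= p / 2 * (s * s) + N * N / (2 * p).
Proof.
move=> hp hL.
have hLL : L * L <= N * N.
  rewrite -(Rabs_pos_eq (L * L)) ?Rabs_mult; last by apply: Rle_0_sqr.
  by have := Rabs_pos L; nra.
apply: Rle_trans (Rle_abs _) _; rewrite Rabs_mult.
apply: Rle_trans (abs_mul_le_amgm s L p hp) _.
apply: Rplus_le_compat_l; apply: Rmult_le_compat_r => //.
by apply: Rlt_le; apply: Rinv_0_lt_compat; lra.
Qed.

Lemma cone_sqr_le d s N B Y : 0 < d <= 1 / 4 -> 0 < s -> s <= d * N ->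
  N * N <= 2 * (s * s) + B * Y -> s * s <= d / 2 * (B * Y).
Proof.
move=> hd hs hsN hN.
have hN0 : 0 <= N by nra.
have h1 : s * s <= d * d * (N * N) by nra.
have h2 : s * s <= d * d * (2 * (s * s) + B * Y).
  apply: Rle_trans h1 _; apply: Rmult_le_compat_l => //; nra.
have h3 : s * s * (1 - 2 * (d * d)) <= d * d * (B * Y) by lra.
have hss : 0 < s * s by nra.
have hd2 : 2 * (d * d) <= 1 / 8 by nra.
have h4 : s * s * (7 / 8) <= d * d * (B * Y).
  by apply: Rle_trans h3; apply: Rmult_le_compat_l; lra.
have hBY : 0 < B * Y by nra.
have : d * d * (B * Y) <= 7 / 16 * d * (B * Y) by nra.
lra.
Qed.

Section DriftEstimate.
Variables (nI nJ : nat) (edge : 'I_nI -> 'I_nJ -> bool) (i0 : 'I_nI).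
Variables (mu : mat nI nJ) (gam ell : vec nI) (mL M a : R).
Hypothesis hub_adj : forall j, edge i0 j.
Hypothesis leaf_single : forall i, i != i0 ->
  exists j0, edge i j0 /\ forall j, j <> j0 -> edge i j = false.
Hypothesis mu_off : forall i j, edge i j = false -> mu i j = 0.
Hypothesis mL_gt0 : 0 < mL.
Hypothesis mu_ge : forall i j, edge i j -> mL <= mu i j.
Hypothesis mu_bounds : forall i j, 0 <= mu i j <= M.
Hypothesis gam_bounds : forall i, 0 <= gam i <= M.
Hypothesis ell_bound : forall i, Rabs (ell i) <= M.
Hypothesis mL_le_M : mL <= M.
Hypothesis a_gt0 : 0 < a.
Hypothesis a_le1 : a <= 1.
Hypothesis nI_ge1 : 1 <= INR nI.
Hypothesis a_small : a * (4 * INR nI * (M * M)) <= mL * mL.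

Let b x uc us i := drift edge mu gam ell x uc us i.

Definition drift_const := a * (INR nI * INR nI) * (M * M) / mL +
  4 * INR nI * (M * M) / mL + INR nI * INR nI * (M * M) / 2.

(* On the cone e.x <= cone_width |x| the square (e.x)^2 is small against the
   leaf coordinates: see [cone_sqr_le]. *)
Definition cone_const := INR nI * (18 * (M * M) / mL + M) + 1 + mL.
Definition cone_width := Rmin (1 / 4) (mL / (8 * cone_const * (2 * INR nI + 1))).

(* Total service = hub rates applied to the column sums of G + these gaps. *)
Definition rate_gap x uc us i :=
  sumR (fun j => (mu i j - mu i0 j) * Ghat edge uc us x i j).

Lemma Ghat_is_G x uc us : in_U uc us ->
  is_G edge (fun i => x i - pospart (esum x) * uc i) (fun j => - (negpart (esum x) * us j))
    (Ghat edge uc us x).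
Proof.
move=> [_ [_ [e_uc e_us]]]; apply: (Gmap_is_G _ _ _ _ hub_adj leaf_single).
rewrite sumRB sumRN !sumR_scale -/(esum x) -/(esum uc) -/(esum us) e_uc e_us.
by rewrite !Rmult_1_r sub_pospart.
Qed.

Lemma drift_as_sumR x uc us i :
  b x uc us i = - sumR (fun j => mu i j * Ghat edge uc us x i j)
                - gam i * pospart (esum x) * uc i + ell i.
Proof.
rewrite /b /drift /sumR big_mkcond; congr (- _ - _ + _); apply: eq_bigr => j _.
by case e: (edge i j) => //; rewrite mu_off //; ring.
Qed.

Lemma drift_leaf x uc us i : in_U uc us -> i != i0 ->
  let alpha := x i - pospart (esum x) * uc i in
  exists mui d, mL <= mui <= M /\ Rabs d <= M /\
    b x uc us i = - (mui * alpha) - gam i * pospart (esum x) * uc i + ell i /\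
    rate_gap x uc us i = d * alpha.
Proof.
move=> hU hi /=.
have [j0 [hj0 [hrow hgap]]] :=
  is_G_leaf_row _ _ _ _ leaf_single mu _ _ _ (Ghat_is_G x uc us hU) i hi.
have [mu0 muM] := mu_bounds i j0; have [hub0 hubM] := mu_bounds i0 j0.
exists (mu i j0), (mu i j0 - mu i0 j0); split; first by split=> //; exact: mu_ge.
split; first by rewrite /Rabs; case: Rcase_abs; lra.
by rewrite drift_as_sumR hrow /rate_gap hgap.
Qed.

Lemma qlyap_drift_split x uc us : in_U uc us ->
  let s := esum x in
  a * s * sumR (b x uc us) + sumR (fun i => offhub i0 x i * b x uc us i) =
  a * s * (negpart s * sumR (fun j => mu i0 j * us j) -
           pospart s * sumR (fun i => gam i * uc i) + sumR ell) +
  sumR (fun i => offhub i0 x i * b x uc us i - a * s * rate_gap x uc us i).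
Proof.
move=> hU /=.
have htot := is_G_total_flow _ _ _ i0 mu _ _ _ (Ghat_is_G x uc us hU).
have -> : sumR (b x uc us) = negpart (esum x) * sumR (fun j => mu i0 j * us j) -
    sumR (rate_gap x uc us) - pospart (esum x) * sumR (fun i => gam i * uc i) + sumR ell.
  rewrite (sumR_eq _ _ (drift_as_sumR x uc us)) sumR_split !sumRB sumRN htot.
  have -> : sumR (fun j => mu i0 j * - (negpart (esum x) * us j)) =
            - (negpart (esum x) * sumR (fun j => mu i0 j * us j)).
    by rewrite -sumR_scale -sumRN; apply: sumR_eq => j; ring.
  have -> : sumR (fun i => gam i * pospart (esum x) * uc i) =
            pospart (esum x) * sumR (fun i => gam i * uc i).
    by rewrite -sumR_scale; apply: sumR_eq => i; ring.
  by rewrite /rate_gap; ring.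
rewrite sumRB sumR_scale; ring.
Qed.

Lemma hub_term x uc us : offhub i0 x i0 * b x uc us i0 - a * esum x * rate_gap x uc us i0 = 0.
Proof.
rewrite /offhub eqxx /rate_gap (sumR_eq _ (fun _ => 0)) ?sumR_zero => [|j]; ring.
Qed.

Lemma hub_service_ge (uc : vec nI) (us : vec nJ) :
  in_U uc us -> mL <= sumR (fun j => mu i0 j * us j).
Proof.
move=> [_ [us_ge0 [_ e_us]]].
have : sumR (fun j => mL * us j) <= sumR (fun j => mu i0 j * us j).
  by apply: ler_sumR => j; apply: Rmult_le_compat_r; [exact: us_ge0 | exact: mu_ge].
by rewrite sumR_scale -/(esum us) e_us Rmult_1_r.
Qed.

Lemma abs_sum_ell_le : Rabs (sumR ell) <= INR nI * M.
Proof. exact: Rle_trans (sumR_abs_le _) (sumR_le_const _ _ ell_bound). Qed.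

Lemma drift_term_le_nonpos x uc us i : in_U uc us -> esum x <= 0 ->
  offhub i0 x i * b x uc us i - a * esum x * rate_gap x uc us i <=
  - (5 * mL / 8) * (offhub i0 x i * offhub i0 x i) +
  (a * mL / (4 * INR nI) * (esum x * esum x) + 2 * (M * M) / mL).
Proof.
move=> hU hs.
have hK : 0 <= a * mL / (4 * INR nI) * (esum x * esum x) + 2 * (M * M) / mL.
  have : 0 <= a * mL / (4 * INR nI) by apply: Rdiv_le_0_compat; nra.
  have : 0 <= 2 * (M * M) / mL by apply: Rdiv_le_0_compat; nra.
  have := Rle_0_sqr (esum x); rewrite /Rsqr; nra.
case: (eqVneq i i0) => [->|hi]; first by rewrite hub_term /offhub eqxx; lra.
have [mui [d [hmu [hd [-> ->]]]]] := drift_leaf x uc us i hU hi.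
rewrite /offhub (negbTE hi) pospart_eq0 //.
have -> : x i * (- (mui * (x i - 0 * uc i)) - gam i * 0 * uc i + ell i) -
          a * esum x * (d * (x i - 0 * uc i)) =
          x i * (- (mui * x i) + ell i) - a * esum x * (d * x i) by ring.
have hl := ell_bound i; rewrite -Rplus_assoc; apply: leaf_term_le_nonpos; lra.
Qed.

Lemma drift_term_le_pos x uc us i : in_U uc us -> 0 < esum x ->
  offhub i0 x i * b x uc us i - a * esum x * rate_gap x uc us i <=
  - (3 * mL / 4) * (offhub i0 x i * offhub i0 x i) +
  ((18 * (M * M) / mL + M) * (esum x * esum x) + 2 * (M * M) / mL).
Proof.
move=> hU hs.
have hK : 0 <= (18 * (M * M) / mL + M) * (esum x * esum x) + 2 * (M * M) / mL.
  have : 0 <= 18 * (M * M) / mL by apply: Rdiv_le_0_compat; nra.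
  have : 0 <= 2 * (M * M) / mL by apply: Rdiv_le_0_compat; nra.
  nra.
case: (eqVneq i i0) => [->|hi]; first by rewrite hub_term /offhub eqxx; lra.
have [mui [d [hmu [hd [-> ->]]]]] := drift_leaf x uc us i hU hi.
have [uc_ge0 [_ [e_uc _]]] := hU.
have uc_le1 : uc i <= 1 by rewrite -e_uc; apply: sumR_ge_term.
rewrite /offhub (negbTE hi) pospart_id; last lra.
have hl := ell_bound i; have hg := gam_bounds i.
have hu := uc_ge0 i; rewrite -Rplus_assoc; apply: leaf_term_le_pos; lra.
Qed.

Lemma qlyap_drift_le_nonpos x uc us : in_U uc us -> esum x <= 0 ->
  a * esum x * sumR (b x uc us) + sumR (fun i => offhub i0 x i * b x uc us i) <=
  drift_const - mL / 4 * qlyap a i0 x.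
Proof.
move=> hU hs; rewrite qlyap_drift_split //= pospart_eq0 //.
have -> : negpart (esum x) = - esum x by apply: Rmax_left; lra.
have hsum := sumR_le_affine _ (fun i => offhub i0 x i * offhub i0 x i) _ _
               (fun i => drift_term_le_nonpos x uc us i hU hs).
move: hsum; rewrite /qlyap /drift_const.
set s := esum x; set Y := sumR (fun i => offhub i0 x i * offhub i0 x i) => hsum.
have hY : 0 <= Y by apply: sumR_ge0 => i; apply: Rle_0_sqr.
have hss := Rle_0_sqr s; rewrite /Rsqr in hss.
have hserv := hub_service_ge uc us hU.
have hell := mul_le_amgm_bound s (sumR ell) _ (mL / 2) ltac:(lra) abs_sum_ell_le.
have e1 : mL / 2 / 2 = mL / 4 by field.
have e2 : INR nI * M * (INR nI * M) / (2 * (mL / 2)) = INR nI * INR nI * (M * M) / mL.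
  by field; lra.
rewrite e1 e2 in hell.
have hK : INR nI * (a * mL / (4 * INR nI) * (s * s) + 2 * (M * M) / mL) =
          a * mL / 4 * (s * s) + 2 * INR nI * (M * M) / mL by field; lra.
have c1 : 0 <= INR nI * INR nI * (M * M) / 2 by apply: Rdiv_le_0_compat; nra.
have c2 : 0 <= 2 * INR nI * (M * M) / mL by apply: Rdiv_le_0_compat; nra.
have c3 : 0 <= mL * Y by apply: Rmult_le_pos; lra.
have c4 : 0 <= a * mL * (s * s) by apply: Rmult_le_pos => //; nra.
have hhub : a * (s * s) * mL <= a * (s * s) * sumR (fun j => mu i0 j * us j).
  by apply: Rmult_le_compat_l; nra.
have hell' : a * (s * sumR ell) <=
             a * (mL / 4 * (s * s) + INR nI * INR nI * (M * M) / mL).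
  by apply: Rmult_le_compat_l; lra.
have -> : a * (INR nI * INR nI) * (M * M) / mL = a * (INR nI * INR nI * (M * M) / mL).
  by field; lra.
lra.
Qed.

Lemma cone_const_ge : INR nI * (18 * (M * M) / mL + M) + 1 / 2 <= cone_const /\ mL <= cone_const.
Proof.
have : 0 <= INR nI * (18 * (M * M) / mL + M).
  apply: Rmult_le_pos; first lra.
  have : 0 <= 18 * (M * M) / mL by apply: Rdiv_le_0_compat; nra.
  lra.
rewrite /cone_const; lra.
Qed.

Lemma cone_width_bounds : 0 < cone_width <= 1 / 4.
Proof.
have [_ hK] := cone_const_ge.
split; last exact: Rmin_l.
by apply: Rmin_pos; [lra | apply: Rdiv_lt_0_compat; nra].
Qed.

Lemma cone_sqr_le_leaves x : 0 < esum x -> esum x <= cone_width * vnorm x ->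
  esum x * esum x <= mL / (16 * cone_const) * sumR (fun i => offhub i0 x i * offhub i0 x i).
Proof.
move=> hs hcone.
have hd := cone_width_bounds.
have [_ hK] := cone_const_ge.
have hN : vnorm x * vnorm x <= 2 * (esum x * esum x) +
          (2 * INR nI + 1) * sumR (fun i => offhub i0 x i * offhub i0 x i).
  by rewrite vnorm_sqr; apply: sumsq_le_offhub.
have := cone_sqr_le _ _ _ _ _ hd hs hcone hN.
have hY : 0 <= sumR (fun i => offhub i0 x i * offhub i0 x i).
  by apply: sumR_ge0 => i; apply: Rle_0_sqr.
move: hY; set Y := sumR _ => hY h.
apply: Rle_trans h _.
have -> : mL / (16 * cone_const) * Y =
          mL / (8 * cone_const * (2 * INR nI + 1)) / 2 * ((2 * INR nI + 1) * Y) by field; lra.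
apply: Rmult_le_compat_r; first nra.
have : cone_width <= mL / (8 * cone_const * (2 * INR nI + 1)) by apply: Rmin_r.
lra.
Qed.

Lemma cone_absorb x : 0 < esum x -> esum x <= cone_width * vnorm x ->
  let Y := sumR (fun i => offhub i0 x i * offhub i0 x i) in
  (INR nI * (18 * (M * M) / mL + M) + 1 / 2) * (esum x * esum x) <= mL / 16 * Y /\
  a * (esum x * esum x) <= Y.
Proof.
move=> hs hcone Y; have hsq := cone_sqr_le_leaves x hs hcone; rewrite -/Y in hsq.
have hY : 0 <= Y by apply: sumR_ge0 => i; apply: Rle_0_sqr.
have hss := Rle_0_sqr (esum x); rewrite /Rsqr in hss.
have [hK1 hK2] := cone_const_ge.
split.
  apply: Rle_trans (Rmult_le_compat_r _ _ _ hss hK1) _.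
  have -> : mL / 16 * Y = cone_const * (mL / (16 * cone_const) * Y) by field; lra.
  by apply: Rmult_le_compat_l; lra.
have : mL / (16 * cone_const) <= 1.
  by apply: (Rmult_le_reg_r (16 * cone_const)); [lra | rewrite /Rdiv Rmult_assoc Rinv_l; lra].
have : a * (esum x * esum x) <= esum x * esum x by nra.
nra.
Qed.

Lemma ell_term_le s : a * (s * sumR ell) <= 1 / 2 * (s * s) + INR nI * INR nI * (M * M) / 2.
Proof.
have := mul_le_amgm_bound s (sumR ell) _ 1 ltac:(lra) abs_sum_ell_le.
have -> : INR nI * M * (INR nI * M) / (2 * 1) = INR nI * INR nI * (M * M) / 2 by field.
move=> hell.
have hss := Rle_0_sqr s; rewrite /Rsqr in hss.
have : 0 <= INR nI * INR nI * (M * M) / 2 by apply: Rdiv_le_0_compat; nra.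
have : a * (s * sumR ell) <= a * (1 / 2 * (s * s) + INR nI * INR nI * (M * M) / 2).
  by apply: Rmult_le_compat_l; lra.
nra.
Qed.

Lemma qlyap_drift_le_pos x uc us : in_U uc us -> 0 < esum x ->
  esum x <= cone_width * vnorm x ->
  a * esum x * sumR (b x uc us) + sumR (fun i => offhub i0 x i * b x uc us i) <=
  drift_const - mL / 4 * qlyap a i0 x.
Proof.
move=> hU hs hcone; have [hA has] := cone_absorb x hs hcone.
rewrite qlyap_drift_split //= pospart_id; last lra.
have -> : negpart (esum x) = 0 by apply: Rmax_right; lra.
have hsum := sumR_le_affine _ (fun i => offhub i0 x i * offhub i0 x i) _ _
               (fun i => drift_term_le_pos x uc us i hU hs).
have hell := ell_term_le (esum x).
move: hsum hA has hell; rewrite /qlyap /drift_const.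
set s := esum x; set Y := sumR (fun i => offhub i0 x i * offhub i0 x i) => hsum hA has hell.
have hY : 0 <= Y by apply: sumR_ge0 => i; apply: Rle_0_sqr.
have hss := Rle_0_sqr s; rewrite /Rsqr in hss.
have hgam : 0 <= sumR (fun i => gam i * uc i).
  have [uc_ge0 _] := hU; apply: sumR_ge0 => i.
  by apply: Rmult_le_pos; [case: (gam_bounds i) | exact: uc_ge0].
have hn : INR nI * ((18 * (M * M) / mL + M) * (s * s) + 2 * (M * M) / mL) =
          INR nI * (18 * (M * M) / mL + M) * (s * s) + 2 * INR nI * (M * M) / mL.
  by field; lra.
have c1 : 0 <= INR nI * INR nI * (M * M) / 2 by apply: Rdiv_le_0_compat; nra.
have c2 : 0 <= 2 * INR nI * (M * M) / mL by apply: Rdiv_le_0_compat; nra.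
have c3 : 0 <= a * (INR nI * INR nI) * (M * M) / mL.
  by apply: Rdiv_le_0_compat; [apply: Rmult_le_pos; nra | lra].
have c4 : 0 <= a * (s * s) * sumR (fun i => gam i * uc i) by apply: Rmult_le_pos; nra.
have c5 : mL * (a * (s * s)) <= mL * Y by apply: Rmult_le_compat_l; lra.
have c6 : 0 <= mL * Y by apply: Rmult_le_pos; lra.
lra.
Qed.

Lemma qlyap_drift_le x uc us : in_U uc us -> esum x <= cone_width * vnorm x ->
  a * esum x * sumR (b x uc us) + sumR (fun i => offhub i0 x i * b x uc us i) <=
  drift_const - mL / 4 * qlyap a i0 x.
Proof.
move=> hU hcone; case: (Rle_lt_dec (esum x) 0) => hs.
- exact: qlyap_drift_le_nonpos.
- exact: qlyap_drift_le_pos.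
Qed.
End DriftEstimate.

Lemma derivable_pt_lim_comp_quadratic (phi : R -> R) r l c1 c2 :
  derivable_pt_lim phi r l ->
  derivable_pt_lim (fun t => phi (r + c1 * t + c2 * (t * t))) 0 (l * c1).
Proof.
move=> h.
have hq : derivable_pt_lim (fun t => r + c1 * t + c2 * (t * t)) 0 c1.
  apply: derivable_pt_lim_congr.
    apply: (derivable_pt_lim_plus (fun t => r + c1 * t) (fun t => c2 * (t * t))).
      apply: (derivable_pt_lim_plus (fun _ => r) (fun t => c1 * t)).
        exact: derivable_pt_lim_const.
      exact: (derivable_pt_lim_mult (fun _ => c1) id _ _ _ (derivable_pt_lim_const _ _)
                                    (derivable_pt_lim_id _)).
    apply: (derivable_pt_lim_mult (fun _ => c2) (fun t => t * t)).
      exact: derivable_pt_lim_const.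
    exact: (derivable_pt_lim_mult id id _ _ _ (derivable_pt_lim_id _) (derivable_pt_lim_id _)).
  rewrite /id; ring.
have := derivable_pt_lim_chain phi _ 0 _ _ hq.
by rewrite (_ : r + c1 * 0 + c2 * (0 * 0) = r); [apply | ring].
Qed.

Definition lyapV {n} (a : R) (i0 : 'I_n) (c p T0 : R) (x : vec n) : R :=
  T0 * sfpow c p (qlyap a i0 x).
Definition lyapDV {n} (a : R) (i0 : 'I_n) (c p T0 : R) (i : 'I_n) (x : vec n) : R :=
  T0 * p * (sfpow c (p - 1) (qlyap a i0 x) * sfloor' c (qlyap a i0 x)) * qlyap_grad a i0 x i.
Definition lyapD2V {n} (a : R) (i0 : 'I_n) (c p T0 : R) (i k : 'I_n) (x : vec n) : R :=
  let q := qlyap a i0 x in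
  T0 * p * (((p - 1) * sfpow c (p - 2) q * sfloor' c q * sfloor' c q +
             sfpow c (p - 1) q * sfloor'' c q) * (qlyap_grad a i0 x k * qlyap_grad a i0 x i) +
            sfpow c (p - 1) q * sfloor' c q * qlyap_hess a i0 i k).

Section LyapunovFunction.
Variables (n : nat) (a : R) (i0 : 'I_n) (c p T0 : R).
Hypothesis c_gt0 : 0 < c.

Lemma derivable_sfpow_sfloor' r :
  derivable_pt_lim (fun r => sfpow c (p - 1) r * sfloor' c r) r
    ((p - 1) * sfpow c (p - 2) r * sfloor' c r * sfloor' c r + sfpow c (p - 1) r * sfloor'' c r).
Proof.
apply: derivable_pt_lim_congr.
  apply: (derivable_pt_lim_mult (sfpow c (p - 1)) (sfloor' c)).
    exact: (derivable_sfpow c c_gt0 (p - 1) r).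
  exact: derivable_sfloor'.
by rewrite /sfpow (_ : p - 1 - 1 = p - 2) //; ring.
Qed.

Lemma lyapV_partial x i :
  derivable_pt_lim (fun t => lyapV a i0 c p T0 (shift x i t)) 0 (lyapDV a i0 c p T0 i x).
Proof.
apply: (derivable_pt_lim_ext (fun t => T0 * sfpow c p (qlyap a i0 x +
          qlyap_grad a i0 x i * t + qlyap_hess a i0 i i / 2 * (t * t)))).
  by move=> t; rewrite /lyapV qlyap_shift.
apply: derivable_pt_lim_congr.
  apply: (derivable_pt_lim_mult (fun _ => T0)); first exact: derivable_pt_lim_const.
  apply: derivable_pt_lim_comp_quadratic; exact: (derivable_sfpow c c_gt0 p).
rewrite /lyapDV /sfpow; ring.
Qed.

Lemma lyapDV_partial x i k :
  derivable_pt_lim (fun t => lyapDV a i0 c p T0 i (shift x k t)) 0 (lyapD2V a i0 c p T0 i k x).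
Proof.
pose g r := sfpow c (p - 1) r * sfloor' c r.
apply: (derivable_pt_lim_ext (fun t => T0 * p * g (qlyap a i0 x + qlyap_grad a i0 x k * t +
          qlyap_hess a i0 k k / 2 * (t * t)) * (qlyap_grad a i0 x i + qlyap_hess a i0 i k * t))).
  by move=> t; rewrite /lyapDV qlyap_shift qlyap_grad_shift.
apply: derivable_pt_lim_congr.
  apply: (derivable_pt_lim_mult (fun t => T0 * p * g _)).
    apply: (derivable_pt_lim_mult (fun _ => T0 * p)); first exact: derivable_pt_lim_const.
    exact: derivable_pt_lim_comp_quadratic (derivable_sfpow_sfloor' _).
  apply: (derivable_pt_lim_plus (fun _ => _) (fun t => _ * t)); first exact: derivable_pt_lim_const.
  exact: (derivable_pt_lim_mult (fun _ => _) id _ _ _ (derivable_pt_lim_const _ _)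
                                (derivable_pt_lim_id _)).
rewrite /lyapD2V /g /id (_ : qlyap a i0 x + qlyap_grad a i0 x k * 0 +
                             qlyap_hess a i0 k k / 2 * (0 * 0) = qlyap a i0 x); ring.
Qed.

Lemma continuous_vec_qlyap : continuous_vec (qlyap a i0).
Proof.
have hoff i : continuous_vec (fun y : vec n => offhub i0 y i).
  by rewrite /offhub; case: (i == i0); [exact: continuous_vec_const | exact: continuous_vec_coord].
have hesum : continuous_vec (fun y : vec n => esum y).
  exact: (continuous_vec_sum _ _ (fun i y => y i) (continuous_vec_coord _)).
apply: continuous_vec_plus.
  by apply: continuous_vec_scal; apply: continuous_vec_mult.
by apply: (continuous_vec_sum _ _ (fun i y => offhub i0 y i * offhub i0 y i)) => i;
  apply: continuous_vec_mult.
Qed.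

Lemma continuous_vec_qlyap_grad i : continuous_vec (fun y => qlyap_grad a i0 y i).
Proof.
apply: continuous_vec_plus; apply: continuous_vec_scal.
  exact: (continuous_vec_sum _ _ (fun i y => y i) (continuous_vec_coord _)).
by rewrite /offhub; case: (i == i0); [exact: continuous_vec_const | exact: continuous_vec_coord].
Qed.

Lemma continuous_vec_of_qlyap (f f' : R -> R) : (forall r, derivable_pt_lim f r (f' r)) ->
  continuous_vec (fun y => f (qlyap a i0 y)).
Proof.
move=> hf; apply: (continuous_vec_comp _ f _ continuous_vec_qlyap) => y.
by apply: derivable_continuous_pt; exists (f' (qlyap a i0 y)); exact: hf.
Qed.

Lemma continuous_vec_sfloor'' : continuous_vec (fun y => sfloor'' c (qlyap a i0 y)).
Proof.
have -> : (fun y => sfloor'' c (qlyap a i0 y)) =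
          (fun y => 2 / (c * c) * pospart (c + -1 * qlyap a i0 y)).
  apply: functional_extensionality => y.
  by rewrite /sfloor'' (_ : c + -1 * qlyap a i0 y = c - qlyap a i0 y); [field; lra | ring].
apply: continuous_vec_scal; apply: (continuous_vec_comp _ pospart).
  by apply: continuous_vec_plus; [exact: continuous_vec_const |
                                  apply: continuous_vec_scal; exact: continuous_vec_qlyap].
move=> y; exact: continuity_pt_pospart.
Qed.

Lemma lyapV_C2 : is_C2 (lyapV a i0 c p T0) (lyapDV a i0 c p T0) (lyapD2V a i0 c p T0).
Proof.
have hpow q : continuous_vec (fun y => sfpow c q (qlyap a i0 y)).
  exact: (continuous_vec_of_qlyap _ _ (derivable_sfpow c c_gt0 q)).
have h1 : continuous_vec (fun y => sfloor' c (qlyap a i0 y)).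
  exact: (continuous_vec_of_qlyap _ _ (derivable_sfloor' c c_gt0)).
have hg := continuous_vec_qlyap_grad.
split; first by move=> i x; exact: lyapV_partial.
split; first by move=> i k x; exact: lyapDV_partial.
split; [|split].
- by apply: continuous_vec_scal.
- move=> i; apply: continuous_vec_mult => //.
  by apply: continuous_vec_scal; apply: continuous_vec_mult.
- move=> i k; apply: continuous_vec_scal; apply: continuous_vec_plus.
    apply: continuous_vec_mult; last exact: continuous_vec_mult.
    apply: continuous_vec_plus.
      by do 2 apply: continuous_vec_mult => //; apply: continuous_vec_scal.
    by apply: continuous_vec_mult; last exact: continuous_vec_sfloor''.
  apply: continuous_vec_mult; last exact: continuous_vec_const.
  exact: continuous_vec_mult.
Qed.
End LyapunovFunction.

Lemma Rpower_pred_mul h q : 0 < h -> Rpower h q = Rpower h (q - 1) * h.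
Proof.
by move=> hh; rewrite -{3}(Rpower_1 h hh) -Rpower_plus; congr Rpower; ring.
Qed.

(* With [h = sfloor c0 q], [h1 = sfloor' c0 q], [h2 = sfloor'' c0 q], [S] and
   [D] the first- and second-order diffusion terms and [F] the drift term, the
   generator of [h^p] is [p h^(p-1)] times the left-hand side. *)
Lemma generator_bracket_le p h h1 h2 q S D F Lam C k2 c0 :
  0 < h -> 0 <= h1 <= 1 -> 0 <= h2 -> h2 * q <= 2 -> 0 <= q <= h -> h <= c0 + h1 * q ->
  0 <= S <= 8 * Lam * q -> D <= 4 * Lam -> F <= 2 * C - 2 * k2 * q ->
  0 <= Lam -> 0 <= C -> 0 < k2 ->
  ((p - 1) * (h1 * h1) / h + h2) * S + h1 * (D + F) <=
  Rabs (p - 1) * (8 * Lam) + 2 * (8 * Lam) + 4 * Lam + 2 * C + 2 * k2 * c0 - 2 * k2 * h.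
Proof.
move=> hh [h10 h11] h20 h2q [hq0 hqh] hhc [hS0 hS] hD hF hL hC hk.
have hSh : S / h <= 8 * Lam.
  apply: (Rmult_le_reg_r h) => //; rewrite /Rdiv Rmult_assoc Rinv_l; nra.
have hSh0 : 0 <= S / h by apply: Rdiv_le_0_compat.
have t1 : (p - 1) * (h1 * h1) / h * S <= Rabs (p - 1) * (8 * Lam).
  have -> : (p - 1) * (h1 * h1) / h * S = (p - 1) * (h1 * h1 * (S / h)) by field; lra.
  apply: Rle_trans (Rle_abs _) _; rewrite Rabs_mult.
  apply: Rmult_le_compat_l; first exact: Rabs_pos.
  rewrite Rabs_pos_eq; last by apply: Rmult_le_pos => //; nra.
  have : h1 * h1 <= 1 by nra.
  nra.
have t2 : h2 * S <= 2 * (8 * Lam) by nra.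
have t3 : h1 * (D + F) <= 4 * Lam + 2 * C + 2 * k2 * c0 - 2 * k2 * h.
  have : h1 * (D + F) <= h1 * (4 * Lam + 2 * C - 2 * k2 * q) by apply: Rmult_le_compat_l; lra.
  have : h1 * (4 * Lam + 2 * C) <= 1 * (4 * Lam + 2 * C) by apply: Rmult_le_compat_r; lra.
  nra.
have -> : ((p - 1) * (h1 * h1) / h + h2) * S + h1 * (D + F) =
          (p - 1) * (h1 * h1) / h * S + h2 * S + h1 * (D + F) by ring.
lra.
Qed.

(* [G + N] is negative once [h >= K / k2]; below that, [h] ranges over a compact
   subinterval of (0, +oo), on which [P1 = h^(p-1)] is bounded. *)
Lemma drift_plus_growth_le T0 p K k2 c0 P0 P1 h G N :
  0 < T0 -> 0 < p -> 0 <= K -> 0 < k2 -> 0 < c0 -> c0 / 3 <= h -> 0 < P1 ->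
  P0 = P1 * h -> G <= T0 * p * P1 * (K - 2 * k2 * h) -> N <= T0 * p * k2 * P0 ->
  (h <= K / k2 + c0 -> P0 <= Rpower (K / k2 + c0) p) ->
  G + N <= T0 * p * K * (3 * Rpower (K / k2 + c0) p / c0) + 1.
Proof.
move=> hT hp hK hk hc hh hP1 e0 hG hN hmon.
have hTpP : 0 < T0 * p * P1 by do 2 apply: Rmult_lt_0_compat => //.
have hX : G + N <= T0 * p * P1 * (K - k2 * h) by rewrite e0 in hN; lra.
have hRP := Rpower_gt0 (K / k2 + c0) p.
have hR0 : 0 <= T0 * p * K * (3 * Rpower (K / k2 + c0) p / c0).
  by apply: Rmult_le_pos; [nra | apply: Rdiv_le_0_compat; lra].
case: (Rle_lt_dec (K / k2) h) => hc2.
  have : K <= k2 * h.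
    by rewrite -(Rmult_1_l K) -(Rinv_r k2) ?Rmult_assoc; [nra | lra].
  nra.
have hP1b : P1 <= 3 * Rpower (K / k2 + c0) p / c0.
  have h1 : P1 * h <= Rpower (K / k2 + c0) p by rewrite -e0; apply: hmon; lra.
  apply: (Rmult_le_reg_r (c0 / 3)); first lra.
  have -> : 3 * Rpower (K / k2 + c0) p / c0 * (c0 / 3) = Rpower (K / k2 + c0) p by field; lra.
  nra.
have : T0 * p * P1 * (K - k2 * h) <= T0 * p * P1 * K by apply: Rmult_le_compat_l; nra.
have : T0 * p * P1 * K <= T0 * p * (3 * Rpower (K / k2 + c0) p / c0) * K.
  by apply: Rmult_le_compat_r => //; apply: Rmult_le_compat_l; nra.
lra.
Qed.

Lemma qlyap_mat_pos_def n a (i0 : 'I_n) t : 0 < a -> 0 < t ->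
  pos_def (fun i k => t * qlyap_mat a i0 i k).
Proof.
move=> ha ht; split.
  move=> i k; rewrite /qlyap_mat eq_sym.
  by case: (eqVneq k i) => [->|] //=; rewrite andbF.
move=> x [i hi]; rewrite qform_qlyap_mat.
have hsq : 0 < sumR (fun i => x i * x i).
  apply: Rlt_le_trans (sumR_ge_term _ i (fun k => Rle_0_sqr _)).
  by have := Rle_0_sqr (x i); rewrite /Rsqr; case/Rle_lt_or_eq_dec => // e; nra.
have hle := sumsq_le_qlyap n a i0 x ha.
have hK : 0 < 2 / a + 2 * INR n + 1.
  have := pos_INR n; have : 0 < 2 / a by apply: Rdiv_lt_0_compat; lra.
  lra.
have : 0 < qlyap a i0 x by nra.
exact: Rmult_lt_0_compat.
Qed.

Definition lyapunov_certificate (nI nJ : nat) (edge : 'I_nI -> 'I_nJ -> bool)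
  (lam gam ell : 'I_nI -> R) (mu : 'I_nI -> 'I_nJ -> R) (m : R) : Prop :=
  exists (delta kappa : R) (Q : 'I_nI -> 'I_nI -> R)
         (V : vec nI -> R) (DV : 'I_nI -> vec nI -> R)
         (D2V : 'I_nI -> 'I_nI -> vec nI -> R),
    0 < delta /\ 0 < kappa /\ pos_def Q /\
    is_C2 V DV D2V /\
    (forall x : vec nI, 1 <= vnorm x -> V x = rpow (qform Q x) (m / 2)) /\
    (forall (x : vec nI) (uc : vec nI) (us : vec nJ),
        ~ (esum x > delta * vnorm x) -> in_U uc us ->
        gen edge lam gam ell mu DV D2V uc us x <= kappa - rpow (vnorm x) m).

Lemma no_buffer_certificate nJ edge lam gam ell mu m :
  @lyapunov_certificate 0 nJ edge lam gam ell mu m.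
Proof.
exists 1, 1, (fun _ _ => 0), (fun _ => 0), (fun _ _ => 0), (fun _ _ _ => 0).
do 2 (split; first lra).
split; first by split=> // x [[]].
split.
  split; first by move=> i x; exact: derivable_pt_lim_const.
  split; first by move=> i k x; exact: derivable_pt_lim_const.
  by split; [|split]; move=> *; exact: continuous_vec_const.
split.
  move=> x _; rewrite /rpow /qform sumR_ord0.
  by case: Rle_dec => // h; exfalso; apply: h; lra.
by move=> x uc us _ [_ [_ []]]; rewrite /esum sumR_ord0; lra.
Qed.

(* The inverse of [1 + sum_{edges} 1/mu] is below every [mu] on an edge, and
   needs no minimum over a possibly empty set of edges. *)
Lemma exists_rate_lower_bound nI nJ (edge : 'I_nI -> 'I_nJ -> bool) (mu : mat nI nJ) :
  (forall i j, edge i j = true -> 0 < mu i j) ->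
  exists mL, 0 < mL /\ forall i j, edge i j -> mL <= mu i j.
Proof.
move=> hpos; pose w i j := if edge i j then / mu i j else 0.
have hw i j : 0 <= w i j.
  by rewrite /w; case e: (edge i j); [apply/Rlt_le/Rinv_0_lt_compat/hpos | lra].
set S := sumR (fun i => sumR (fun j => w i j)) + 1.
have hS : 0 < S.
  have : 0 <= sumR (fun i => sumR (fun j => w i j)).
    by apply: sumR_ge0 => i; apply: sumR_ge0 => j; exact: hw.
  rewrite /S; lra.
exists (/ S); split; first exact: Rinv_0_lt_compat.
move=> i j he; have hm := hpos i j he.
have : / mu i j <= S.
  have := sumR2_ge_term w i j hw; have -> : w i j = / mu i j by rewrite /w he.
  by rewrite /S; lra.
by move=> h; rewrite -(Rinv_inv (mu i j)); apply: Rinv_le_contravar => //; apply: Rinv_0_lt_compat.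
Qed.

Lemma exists_rate_upper_bound nI nJ (mu : mat nI nJ) (gam ell : vec nI) mL :
  0 < mL -> (forall i j, 0 <= mu i j) -> (forall i, 0 <= gam i) ->
  exists M, mL <= M /\ (forall i j, 0 <= mu i j <= M) /\
            (forall i, 0 <= gam i <= M) /\ (forall i, Rabs (ell i) <= M).
Proof.
move=> hmL hmu hgam.
have hSmu : 0 <= sumR (fun i => sumR (fun j => mu i j)).
  by apply: sumR_ge0 => i; apply: sumR_ge0.
have hSg : 0 <= sumR gam by apply: sumR_ge0.
have hSl : 0 <= sumR (fun i => Rabs (ell i)) by apply: sumR_ge0 => i; apply: Rabs_pos.
exists (sumR (fun i => sumR (fun j => mu i j)) + sumR gam + sumR (fun i => Rabs (ell i)) + mL).
split; first lra.
split; first by move=> i j; have := sumR2_ge_term mu i j hmu; have := hmu i j; lra.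
split; first by move=> i; have := sumR_ge_term gam i hgam; have := hgam i; lra.
by move=> i; have := sumR_ge_term (fun i => Rabs (ell i)) i (fun i => Rabs_pos _); lra.
Qed.

Lemma exists_small_weight mL M n : 0 < mL -> 0 < M -> 0 < n ->
  exists a, 0 < a /\ a <= 1 /\ a * (4 * n * (M * M)) <= mL * mL.
Proof.
move=> hmL hM hn.
have hp : 0 < 4 * n * (M * M) by apply: Rmult_lt_0_compat; [lra | exact: Rmult_lt_0_compat].
exists (Rmin 1 (mL * mL / (4 * n * (M * M)))).
split; first by apply: Rmin_pos; [lra | apply: Rdiv_lt_0_compat; nra].
split; first exact: Rmin_l.
apply: Rle_trans (Rmult_le_compat_r _ _ _ (Rlt_le _ _ hp) (Rmin_r _ _)) _.
by rewrite /Rdiv Rmult_assoc Rinv_l; lra.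
Qed.

Section HubCertificate.
Variables (nI nJ : nat) (edge : 'I_nI -> 'I_nJ -> bool).
Variables (lam gam ell : 'I_nI -> R) (mu : 'I_nI -> 'I_nJ -> R).
Variables (i0 : 'I_nI) (mL M a m : R).
Hypothesis lam_gt0 : forall i, 0 < lam i.
Hypothesis hub_adj : forall j, edge i0 j.
Hypothesis leaf_single : forall i, i != i0 ->
  exists j0, edge i j0 /\ forall j, j <> j0 -> edge i j = false.
Hypothesis mu_off : forall i j, edge i j = false -> mu i j = 0.
Hypothesis mL_gt0 : 0 < mL.
Hypothesis mu_ge : forall i j, edge i j -> mL <= mu i j.
Hypothesis mu_bounds : forall i j, 0 <= mu i j <= M.
Hypothesis gam_bounds : forall i, 0 <= gam i <= M.
Hypothesis ell_bound : forall i, Rabs (ell i) <= M.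
Hypothesis mL_le_M : mL <= M.
Hypothesis a_gt0 : 0 < a.
Hypothesis a_le1 : a <= 1.
Hypothesis nI_ge1 : 1 <= INR nI.
Hypothesis a_small : a * (4 * INR nI * (M * M)) <= mL * mL.
Hypothesis m_ge1 : 1 <= m.

Let K0 := 2 / a + 2 * INR nI + 1.
(* [c0 |x|^2 <= q(x)], so [sfloor c0] does not change [q] on [|x| >= 1]. *)
Let c0 := / K0.
Let p := m / 2.
Let k2 := mL / 4.
Let Lam := sumR lam.
Let K := Rabs (p - 1) * (8 * Lam) + 2 * (8 * Lam) + 4 * Lam +
         2 * drift_const nI mL M a + 2 * k2 * c0.
(* Normalized so that [T0 p k2 c0^p = 1]. *)
Let T0 := / (k2 * p * Rpower c0 p).

Let S x := sumR (fun i => lam i * (qlyap_grad a i0 x i * qlyap_grad a i0 x i)).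
Let D := sumR (fun i => lam i * qlyap_hess a i0 i i).
Let F x uc us := sumR (fun i => drift edge mu gam ell x uc us i * qlyap_grad a i0 x i).

Lemma K0_gt0 : 0 < K0.
Proof.
have : 0 < 2 / a by apply: Rdiv_lt_0_compat; lra.
rewrite /K0; lra.
Qed.

Lemma c0_gt0 : 0 < c0.
Proof. exact: Rinv_0_lt_compat K0_gt0. Qed.

Lemma sumsq_le_qlyap_c0 x : c0 * sumR (fun i => x i * x i) <= qlyap a i0 x.
Proof.
have hK := K0_gt0.
apply: (Rmult_le_reg_l K0) => //; rewrite -Rmult_assoc /c0 Rinv_r; last lra.
by rewrite Rmult_1_l; apply: sumsq_le_qlyap.
Qed.

Lemma p_gt0 : 0 < p.
Proof. rewrite /p; lra. Qed.

Lemma T0_gt0 : 0 < T0.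
Proof.
apply: Rinv_0_lt_compat; apply: Rmult_lt_0_compat; last exact: Rpower_gt0.
by apply: Rmult_lt_0_compat; [rewrite /k2; lra | exact: p_gt0].
Qed.

Lemma T0_normal : T0 * p * k2 * Rpower c0 p = 1.
Proof.
have := Rpower_gt0 c0 p; have := p_gt0.
by rewrite /T0 /k2 => *; field; repeat split; lra.
Qed.

Lemma lyapV_eq_rpow x : 1 <= vnorm x ->
  lyapV a i0 c0 p T0 x = rpow (qform (fun i k => Rpower T0 (/ p) * qlyap_mat a i0 i k) x) p.
Proof.
move=> hN.
have hc0 := c0_gt0; have hp := p_gt0; have hT := T0_gt0.
have hq : c0 <= qlyap a i0 x.
  have := sumsq_le_qlyap_c0 x; rewrite -vnorm_sqr.
  have : 1 <= vnorm x * vnorm x by nra.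
  nra.
rewrite qform_qlyap_mat /rpow /lyapV /sfpow sfloor_id //.
case: Rle_dec => h.
  by have := Rmult_lt_0_compat _ _ (Rpower_gt0 T0 (/ p)) (Rlt_le_trans _ _ _ hc0 hq); lra.
rewrite -Rpower_mult_distr ?Rpower_mult ?Rinv_l ?Rpower_1 //; [lra | exact: Rpower_gt0 | lra].
Qed.

Lemma gen_lyapV_eq x uc us :
  let q := qlyap a i0 x in
  let h := sfloor c0 q in
  gen edge lam gam ell mu (lyapDV a i0 c0 p T0) (lyapD2V a i0 c0 p T0) uc us x =
  T0 * p * sfpow c0 (p - 1) q *
  (((p - 1) * (sfloor' c0 q * sfloor' c0 q) / h + sfloor'' c0 q) * S x +
   sfloor' c0 q * (D + F x uc us)).
Proof.
move=> q h; rewrite {}/h {}/q; set q := qlyap a i0 x.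
have hh : 0 < sfloor c0 q by apply: sfloor_gt0; exact: c0_gt0.
have e2 : sfpow c0 (p - 2) q = sfpow c0 (p - 1) q / sfloor c0 q.
  rewrite /sfpow (Rpower_pred_mul _ (p - 1)) // (_ : p - 1 - 1 = p - 2); last ring.
  by field; lra.
rewrite /gen /S /D /F.
have -> : sumR (fun i => lam i * lyapD2V a i0 c0 p T0 i i x) =
  T0 * p * ((p - 1) * sfpow c0 (p - 2) q * sfloor' c0 q * sfloor' c0 q +
            sfpow c0 (p - 1) q * sfloor'' c0 q) *
    sumR (fun i => lam i * (qlyap_grad a i0 x i * qlyap_grad a i0 x i)) +
  T0 * p * (sfpow c0 (p - 1) q * sfloor' c0 q) * sumR (fun i => lam i * qlyap_hess a i0 i i).
  by rewrite -!sumR_scale -sumR_split; apply: sumR_eq => i; rewrite /lyapD2V -/q; ring.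
have -> : sumR (fun i => drift edge mu gam ell x uc us i * lyapDV a i0 c0 p T0 i x) =
  T0 * p * (sfpow c0 (p - 1) q * sfloor' c0 q) *
    sumR (fun i => drift edge mu gam ell x uc us i * qlyap_grad a i0 x i).
  by rewrite -sumR_scale; apply: sumR_eq => i; rewrite /lyapDV -/q; ring.
rewrite e2; field; lra.
Qed.

Lemma diffusion_first_le x : 0 <= S x <= 8 * Lam * qlyap a i0 x.
Proof.
split.
  by apply: sumR_ge0 => i; apply: Rmult_le_pos; [exact/Rlt_le/lam_gt0 | apply: Rle_0_sqr].
have -> : 8 * Lam * qlyap a i0 x = sumR (fun i => lam i * (8 * qlyap a i0 x)).
  by rewrite (sumR_eq _ (fun i => 8 * qlyap a i0 x * lam i)) ?sumR_scale /Lam => [|i]; ring.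
apply: ler_sumR => i.
apply: Rmult_le_compat_l; first exact/Rlt_le/lam_gt0.
have hz := sumR_ge_term (fun i => offhub i0 x i * offhub i0 x i) i (fun k => Rle_0_sqr _).
rewrite /qlyap /qlyap_grad; move: hz.
set s := esum x; set z := offhub i0 x i; set Y := sumR _ => hz.
have hss := Rle_0_sqr s; rewrite /Rsqr in hss.
have : a * a * (s * s) <= a * (s * s) by nra.
have := Rle_0_sqr (2 * a * s - 2 * z); rewrite /Rsqr.
nra.
Qed.

Lemma diffusion_second_le : D <= 4 * Lam.
Proof.
have -> : 4 * Lam = sumR (fun i => lam i * 4).
  by rewrite (sumR_eq _ (fun i => 4 * lam i)) ?sumR_scale /Lam => [|i]; ring.
apply: ler_sumR => i; apply: Rmult_le_compat_l; first exact/Rlt_le/lam_gt0.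
by rewrite /qlyap_hess; case: (_ && _); lra.
Qed.

Lemma drift_grad_le x uc us : in_U uc us -> esum x <= cone_width nI mL M * vnorm x ->
  F x uc us <= 2 * drift_const nI mL M a - 2 * k2 * qlyap a i0 x.
Proof.
move=> hU hcone.
have := qlyap_drift_le _ _ _ _ _ _ _ _ _ _ hub_adj leaf_single mu_off mL_gt0 mu_ge mu_bounds
          gam_bounds ell_bound mL_le_M a_gt0 a_le1 nI_ge1 a_small x uc us hU hcone.
have -> : F x uc us = 2 * (a * esum x * sumR (fun i => drift edge mu gam ell x uc us i) +
            sumR (fun i => offhub i0 x i * drift edge mu gam ell x uc us i)).
  rewrite /F -sumR_scale -sumR_split -sumR_scale; apply: sumR_eq => i.
  by rewrite /qlyap_grad; ring.
rewrite /k2; lra.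
Qed.

Lemma gen_lyapV_le x uc us : in_U uc us -> esum x <= cone_width nI mL M * vnorm x ->
  gen edge lam gam ell mu (lyapDV a i0 c0 p T0) (lyapD2V a i0 c0 p T0) uc us x <=
  T0 * p * sfpow c0 (p - 1) (qlyap a i0 x) * (K - 2 * k2 * sfloor c0 (qlyap a i0 x)).
Proof.
move=> hU hcone; rewrite gen_lyapV_eq.
have hc0 := c0_gt0; have hq := qlyap_ge0 _ a i0 x (Rlt_le _ _ a_gt0).
have hC : 0 <= drift_const nI mL M a.
  rewrite /drift_const.
  have : 0 <= a * (INR nI * INR nI) * (M * M) / mL.
    by apply: Rdiv_le_0_compat; [apply: Rmult_le_pos; nra | lra].
  have : 0 <= 4 * INR nI * (M * M) / mL by apply: Rdiv_le_0_compat; nra.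
  have : 0 <= INR nI * INR nI * (M * M) / 2 by apply: Rdiv_le_0_compat; nra.
  lra.
have hLam : 0 <= Lam by apply: sumR_ge0 => i; exact/Rlt_le/lam_gt0.
apply: Rmult_le_compat_l.
  apply: Rmult_le_pos; last exact/Rlt_le/Rpower_gt0.
  by apply: Rmult_le_pos; [exact/Rlt_le/T0_gt0 | exact/Rlt_le/p_gt0].
apply: (generator_bracket_le _ _ _ _ (qlyap a i0 x)) => //.
- exact: sfloor_gt0.
- exact: sfloor'_bounds.
- by case: (sfloor''_bounds c0 hc0 _ hq).
- by case: (sfloor''_bounds c0 hc0 _ hq).
- by split=> //; apply: sfloor_ge.
- exact: sfloor_le.
- exact: diffusion_first_le.
- exact: diffusion_second_le.
- exact: drift_grad_le.
- rewrite /k2; lra.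
Qed.


Lemma rpow_vnorm_le x :
  rpow (vnorm x) m <= T0 * p * k2 * sfpow c0 p (qlyap a i0 x).
Proof.
have hc0 := c0_gt0; have hp := p_gt0; have hT := T0_gt0.
have hh := sfloor_ge c0 hc0 _ (qlyap_ge0 _ a i0 x (Rlt_le _ _ a_gt0)).
rewrite /rpow; case: Rle_dec => hN.
  apply: Rmult_le_pos; last exact/Rlt_le/Rpower_gt0.
  by apply: Rmult_le_pos; [nra | rewrite /k2; lra].
have hN0 : 0 < vnorm x by lra.
have hs : 0 < sumR (fun i => x i * x i) by rewrite -vnorm_sqr; nra.
rewrite Rpower_vnorm // -/p.
have hle : sumR (fun i => x i * x i) <= sfloor c0 (qlyap a i0 x) / c0.
  apply: (Rmult_le_reg_l c0) => //; rewrite /Rdiv -Rmult_assoc Rinv_r_simpl_m; last lra.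
  by have := sumsq_le_qlyap_c0 x; lra.
apply: Rle_trans (Rle_Rpower_l _ _ p (Rlt_le _ _ hp) (conj hs hle)) _.
have hh0 : 0 < sfloor c0 (qlyap a i0 x) by apply: sfloor_gt0.
have e : Rpower (sfloor c0 (qlyap a i0 x) / c0) p * Rpower c0 p = sfpow c0 p (qlyap a i0 x).
  rewrite Rpower_mult_distr; last exact: hc0; last exact: Rdiv_lt_0_compat.
  by rewrite /Rdiv Rmult_assoc Rinv_l ?Rmult_1_r //; lra.
apply: Req_le; rewrite -e; move: T0_normal.
set P := Rpower (_ / c0) p => e1.
by rewrite -{1}(Rmult_1_r P) -e1; ring.
Qed.

Lemma K_ge0 : 0 <= K.
Proof.
have hC : 0 <= drift_const nI mL M a.
  rewrite /drift_const.
  have : 0 <= a * (INR nI * INR nI) * (M * M) / mL.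
    by apply: Rdiv_le_0_compat; [apply: Rmult_le_pos; nra | lra].
  have : 0 <= 4 * INR nI * (M * M) / mL by apply: Rdiv_le_0_compat; nra.
  have : 0 <= INR nI * INR nI * (M * M) / 2 by apply: Rdiv_le_0_compat; nra.
  lra.
have hLam : 0 <= Lam by apply: sumR_ge0 => i; exact/Rlt_le/lam_gt0.
have := Rabs_pos (p - 1); have := c0_gt0; rewrite /K /k2; nra.
Qed.

Lemma hub_certificate : lyapunov_certificate nI nJ edge lam gam ell mu m.
Proof.
have hc0 := c0_gt0; have hp := p_gt0; have hT := T0_gt0; have hK := K_ge0.
have hk2 : 0 < k2 by rewrite /k2; lra.
have hbound : 0 <= T0 * p * K * (3 * Rpower (K / k2 + c0) p / c0).
  apply: Rmult_le_pos; first by apply: Rmult_le_pos => //; nra.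
  by apply: Rdiv_le_0_compat => //; have := Rpower_gt0 (K / k2 + c0) p; lra.
exists (cone_width nI mL M), (T0 * p * K * (3 * Rpower (K / k2 + c0) p / c0) + 1),
  (fun i k => Rpower T0 (/ p) * qlyap_mat a i0 i k),
  (lyapV a i0 c0 p T0), (lyapDV a i0 c0 p T0), (lyapD2V a i0 c0 p T0).
split; first by case: (cone_width_bounds nI mL M mL_gt0 mL_le_M nI_ge1).
split; first lra.
split; first exact: (qlyap_mat_pos_def _ _ _ _ a_gt0 (Rpower_gt0 _ _)).
split; first exact: lyapV_C2.
split; first exact: lyapV_eq_rpow.
move=> x uc us /Rnot_lt_le hcone hU.
set q := qlyap a i0 x.
have hq : 0 <= q by apply: qlyap_ge0; lra.
suff : gen edge lam gam ell mu (lyapDV a i0 c0 p T0) (lyapD2V a i0 c0 p T0) uc us x +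
       rpow (vnorm x) m <= T0 * p * K * (3 * Rpower (K / k2 + c0) p / c0) + 1 by lra.
apply: (drift_plus_growth_le T0 p K k2 c0 (sfpow c0 p q) (sfpow c0 (p - 1) q)
          (sfloor c0 q)) => //.
- exact: sfloor_ge_third.
- exact: Rpower_gt0.
- exact: (Rpower_pred_mul _ p (sfloor_gt0 c0 hc0 q)).
- exact: gen_lyapV_le.
- exact: rpow_vnorm_le.
- move=> hle; apply: Rle_Rpower_l; first lra.
  by split=> //; apply: sfloor_gt0.
Qed.
End HubCertificate.

Theorem corollary4p2 (nI nJ : nat) (edge : 'I_nI -> 'I_nJ -> bool)
  (lam gam ell : 'I_nI -> R) (mu : 'I_nI -> 'I_nJ -> R)
  (Htree : bipartite_tree edge)
  (Hlam : forall i, 0 < lam i) (Hgam : forall i, 0 <= gam i)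
  (Hmu_e : forall i j, edge i j = true -> 0 < mu i j)
  (Hmu_n : forall i j, edge i j = false -> mu i j = 0)
  (Hone : forall i1 i2 : 'I_nI,
      (1 < deg edge i1)%nat -> (1 < deg edge i2)%nat -> i1 = i2)
  (m : R) (Hm : 1 <= m) :
  exists (delta kappa : R) (Q : 'I_nI -> 'I_nI -> R)
         (V : vec nI -> R) (DV : 'I_nI -> vec nI -> R)
         (D2V : 'I_nI -> 'I_nI -> vec nI -> R),
    0 < delta /\ 0 < kappa /\ pos_def Q /\
    is_C2 V DV D2V /\
    (forall x : vec nI, 1 <= vnorm x -> V x = rpow (qform Q x) (m / 2)) /\
    (forall (x : vec nI) (uc : vec nI) (us : vec nJ),
        ~ (esum x > delta * vnorm x) -> in_U uc us ->
        gen edge lam gam ell mu DV D2V uc us x <= kappa - rpow (vnorm x) m).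
Proof.
case: nI edge lam gam ell mu Htree Hlam Hgam Hmu_e Hmu_n Hone =>
  [|n] edge lam gam ell mu [connected _] Hlam Hgam Hmu_e Hmu_n Hone.
  exact: no_buffer_certificate.
have [i0 deg_le1] := exists_hub _ _ edge (ltn0Sn n) Hone.
have nI_ge1 : 1 <= INR n.+1 by rewrite S_INR; have := pos_INR n; lra.
have [mL [mL_gt0 mu_ge]] := exists_rate_lower_bound _ _ edge mu Hmu_e.
have mu_ge0 i j : 0 <= mu i j.
  by case e: (edge i j); [exact/Rlt_le/Hmu_e | rewrite Hmu_n //; lra].
have [M [mL_le_M [mu_bounds [gam_bounds ell_bound]]]] :=
  exists_rate_upper_bound _ _ mu gam ell mL mL_gt0 mu_ge0 Hgam.
have [a [a_gt0 [a_le1 a_small]]] :=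
  exists_small_weight mL M (INR n.+1) mL_gt0 ltac:(lra) ltac:(lra).
exact: (hub_certificate _ _ edge lam gam ell mu i0 mL M a m Hlam
          (hub_adj _ _ edge connected i0 deg_le1)
          (leaf_single_edge _ _ edge connected i0 deg_le1) Hmu_n mL_gt0 mu_ge mu_bounds
          gam_bounds ell_bound mL_le_M a_gt0 a_le1 nI_ge1 a_small Hm).
Qed.
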